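(* Let $\lambda\mapsto N(\lambda),M(\lambda)\in\mathbb{R}^{2m\times2m}$ be continuously differentiable in a real parameter $\lambda$, write $\partial=d/d\lambda$, and define $\alpha,\beta,\gamma,F_2,G_2,F_3$ (depending on $\lambda$ and $t$) by $$\begin{bmatrix}\alpha(t)&\beta(t)&\gamma(t)\\0&F_2(t)&G_2(t)\\0&0&F_3(t)\end{bmatrix}:=\exp\!\left(\begin{bmatrix}-N^T&MJ&0\\0&-N^T&M\\0&0&N\end{bmatrix}t\right).$$ Assume $M=M^T$, $F_2(s)^TF_3(s)=I$ and $\partial F_3(s)=-JG_2(s)$ for all $s\in[0,H]$ and all $\lambda$. Then $$\partial G_2(H)=F_2(H)\Big(-\big(F_3(H)^T\gamma(H)\big)^T-F_3(H)^T\gamma(H)+\int_0^HF_3(s)^T\,\partial M\,F_3(s)\,ds-\big(-JG_2(H)\big)^TG_2(H)\Big).$$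
   Context: $J=\begin{bmatrix}0&I_m\\-I_m&0\end{bmatrix}\in\mathbb{R}^{2m\times2m}$. From the definition, $F_2(t)=\exp(-N^Tt)$, $F_3(t)=\exp(Nt)$ and $F_3(t)^TG_2(t)=\int_0^t\exp(N^Ts)M\exp(Ns)\,ds$. *)

From Stdlib Require Import Reals Arith ClassicalEpsilon.
Open Scope R_scope.

(* Real matrices are represented as functions nat -> nat -> R; a k x k
   matrix only uses entries with indices < k.  All operations below only
   read in-range entries when computing in-range entries. *)
Definition Mat := nat -> nat -> R.

Fixpoint rsum (n : nat) (f : nat -> R) : R :=
  match n with O => 0 | S k => rsum k f + f k end.

Definition mmul (n : nat) (A B : Mat) : Mat :=
  fun i j => rsum n (fun k => A i k * B k j).
Definition madd (A B : Mat) : Mat := fun i j => A i j + B i j.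
Definition mopp (A : Mat) : Mat := fun i j => - A i j.
Definition msub (A B : Mat) : Mat := fun i j => A i j - B i j.
Definition mtr (A : Mat) : Mat := fun i j => A j i.
Definition mscal (c : R) (A : Mat) : Mat := fun i j => c * A i j.
Definition mid : Mat := fun i j => if Nat.eqb i j then 1 else 0.

Fixpoint mpow (n : nat) (A : Mat) (k : nat) : Mat :=
  match k with O => mid | S k => mmul n (mpow n A k) A end.

Definition mexp (n : nat) (A : Mat) : Mat := fun i j =>
  epsilon (inhabits 0)
    (fun l => Un_cv (fun K => sum_f_R0 (fun k => mpow n A k i j / INR (fact k)) K) l).

(* J = [[0, I_m], [-I_m, 0]] *)
Definition Jm (m : nat) : Mat := fun i j =>
  if (Nat.ltb i m && Nat.eqb j (i + m))%bool then 1
  else if (Nat.leb m i && Nat.ltb i (2 * m) && Nat.eqb i (j + m))%bool then -1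
  else 0.

(* The 6m x 6m block matrix [[-N^T, M J, 0], [0, -N^T, M], [0, 0, N]]. *)
Definition bigA (m : nat) (N M : Mat) : Mat := fun i j =>
  let n := (2 * m)%nat in
  if Nat.ltb i n then
    (if Nat.ltb j n then - N j i
     else if Nat.ltb j (2 * n) then mmul n M (Jm m) i (j - n)%nat
     else 0)
  else if Nat.ltb i (2 * n) then
    (if Nat.ltb j n then 0
     else if Nat.ltb j (2 * n) then - N (j - n)%nat (i - n)%nat
     else if Nat.ltb j (3 * n) then M (i - n)%nat (j - 2 * n)%nat
     else 0)
  else if Nat.ltb i (3 * n) then
    (if Nat.ltb j (2 * n) then 0
     else if Nat.ltb j (3 * n) then N (i - 2 * n)%nat (j - 2 * n)%nat
     else 0)
  else 0.

Definition Ephi (m : nat) (N M : Mat) (t : R) : Mat :=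
  mexp (6 * m) (mscal t (bigA m N M)).

Definition blk (m : nat) (E : Mat) (a b : nat) : Mat :=
  fun i j => E (a * (2 * m) + i)%nat (b * (2 * m) + j)%nat.

Definition alphaB m N M t := blk m (Ephi m N M t) 0 0.
Definition betaB  m N M t := blk m (Ephi m N M t) 0 1.
Definition gammaB m N M t := blk m (Ephi m N M t) 0 2.
Definition F2B    m N M t := blk m (Ephi m N M t) 1 1.
Definition G2B    m N M t := blk m (Ephi m N M t) 1 2.
Definition F3B    m N M t := blk m (Ephi m N M t) 2 2.

(* Riemann integral of f over [a,b] (the value of RiemannInt for any
   integrability proof; integrands used here are continuous). *)
Definition Rint (f : R -> R) (a b : R) : R :=
  epsilon (inhabits 0)
    (fun l => exists pr : Riemann_integrable f a b, RiemannInt pr = l).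

From Stdlib Require Import Reals Arith ClassicalEpsilon Lra Lia FunctionalExtensionality.
Open Scope R_scope.

(* With K := F3(H)^T G2(H), the block structure of the exponential gives d/dt (F3^T G2) = F3^T M F3
   and G2(0) = 0, so K is the integral of F3^T M F3 over [0, H]; likewise F3(H)^T gamma(H) is the
   integral of F3^T M J G2.  As F2 F3^T = I, G2(H) = F2(H) K and dF2 = - F2 (dF3)^T F2, whence
   (dF2) K = - F2 (dF3)^T G2.  Differentiating under the integral,
   dK = int (dF3)^T M F3 + F3^T dM F3 + F3^T M dF3; with dF3 = - J G2 the last term integrates to
   - F3(H)^T gamma(H), and the first one to its transpose because M is symmetric.
   Differentiation under the integral is justified by uniform convergence in s of the difference
   quotients of F3, which follows from the mean value theorem and the continuity of exp(tA) in A,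
   uniform for t in [0, H]. *)

(** * Finite sums and matrices *)

Lemma rsum_ext n f g : (forall k, (k < n)%nat -> f k = g k) -> rsum n f = rsum n g.
Proof.
  induction n as [|n IH]; intros Hfg; simpl; [reflexivity|].
  rewrite IH, Hfg; auto with arith.
Qed.

Lemma rsum_plus n f g : rsum n (fun k => f k + g k) = rsum n f + rsum n g.
Proof. induction n; simpl; [ring | rewrite IHn; ring]. Qed.

Lemma rsum_minus n f g : rsum n (fun k => f k - g k) = rsum n f - rsum n g.
Proof. induction n; simpl; [ring | rewrite IHn; ring]. Qed.

Lemma rsum_opp n f : rsum n (fun k => - f k) = - rsum n f.
Proof. induction n; simpl; [ring | rewrite IHn; ring]. Qed.

Lemma rsum_scal_l n c f : rsum n (fun k => c * f k) = c * rsum n f.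
Proof. induction n; simpl; [ring | rewrite IHn; ring]. Qed.

Lemma rsum_scal_r n c f : rsum n (fun k => f k * c) = rsum n f * c.
Proof. induction n; simpl; [ring | rewrite IHn; ring]. Qed.

Lemma rsum_const n c : rsum n (fun _ => c) = INR n * c.
Proof. induction n; simpl rsum; [simpl; ring | rewrite IHn, S_INR; ring]. Qed.

Lemma rsum_eq0 n f : (forall k, (k < n)%nat -> f k = 0) -> rsum n f = 0.
Proof. intros Hf; rewrite (rsum_ext n f (fun _ => 0)), rsum_const by auto; ring. Qed.

Lemma rsum_swap n p f :
  rsum n (fun a => rsum p (fun b => f a b)) = rsum p (fun b => rsum n (fun a => f a b)).
Proof.
  induction n; simpl.
  - symmetry; apply rsum_eq0; reflexivity.
  - rewrite IHn, <- rsum_plus; reflexivity.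
Qed.

Lemma rsum_add a b f : rsum (a + b) f = rsum a f + rsum b (fun k => f (a + k)%nat).
Proof.
  induction b; simpl; [rewrite Nat.add_0_r; ring|].
  rewrite Nat.add_succ_r; simpl; rewrite IHb; ring.
Qed.

Lemma rsum_single n f i : (i < n)%nat -> (forall k, (k < n)%nat -> k <> i -> f k = 0) ->
  rsum n f = f i.
Proof.
  induction n; simpl; intros Hi Hf; [lia|].
  destruct (Nat.eq_dec i n) as [->|Hne].
  - rewrite rsum_eq0; [ring|]. intros; apply Hf; lia.
  - rewrite IHn, (Hf n); [ring|lia|lia|lia|]. intros; apply Hf; lia.
Qed.

Lemma rsum_le n f g : (forall k, (k < n)%nat -> f k <= g k) -> rsum n f <= rsum n g.
Proof.
  induction n; simpl; intros Hfg; [lra|].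
  apply Rplus_le_compat; [apply IHn; intros|]; apply Hfg; lia.
Qed.

Lemma rsum_ge0 n f : (forall k, (k < n)%nat -> 0 <= f k) -> 0 <= rsum n f.
Proof. intros Hf; rewrite <- (rsum_eq0 n (fun _ => 0)) by auto; apply rsum_le; auto. Qed.

Lemma rsum_term_le n f i : (i < n)%nat -> (forall k, (k < n)%nat -> 0 <= f k) ->
  f i <= rsum n f.
Proof.
  induction n; simpl; intros Hi Hf; [lia|].
  assert (0 <= f n) by (apply Hf; lia).
  destruct (Nat.eq_dec i n) as [->|Hne].
  - assert (0 <= rsum n f) by (apply rsum_ge0; intros; apply Hf; lia); lra.
  - assert (f i <= rsum n f) by (apply IHn; [lia | intros; apply Hf; lia]); lra.
Qed.

Lemma Rabs_rsum_le n f : Rabs (rsum n f) <= rsum n (fun k => Rabs (f k)).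
Proof.
  induction n; simpl; [rewrite Rabs_R0; lra|].
  eapply Rle_trans; [apply Rabs_triang | lra].
Qed.

Lemma mmul_assoc n A B C : mmul n (mmul n A B) C = mmul n A (mmul n B C).
Proof.
  unfold mmul; do 2 (apply functional_extensionality; intro).
  transitivity (rsum n (fun k => rsum n (fun l => A x l * B l k * C k x0))).
  - apply rsum_ext; intros; rewrite <- rsum_scal_r; reflexivity.
  - rewrite rsum_swap; apply rsum_ext; intros; rewrite <- rsum_scal_l.
    apply rsum_ext; intros; ring.
Qed.

Ltac mx_pointwise lem :=
  unfold mmul, madd, msub, mopp, mscal; do 2 (apply functional_extensionality; intro);
  rewrite <- lem; apply rsum_ext; intros; ring.

Lemma mmul_madd_r n A B C : mmul n A (madd B C) = madd (mmul n A B) (mmul n A C).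
Proof. mx_pointwise rsum_plus. Qed.
Lemma mmul_msub_l n A B C : mmul n (msub A B) C = msub (mmul n A C) (mmul n B C).
Proof. mx_pointwise rsum_minus. Qed.
Lemma mmul_msub_r n A B C : mmul n A (msub B C) = msub (mmul n A B) (mmul n A C).
Proof. mx_pointwise rsum_minus. Qed.
Lemma mmul_mopp_l n A B : mmul n (mopp A) B = mopp (mmul n A B).
Proof. mx_pointwise rsum_opp. Qed.
Lemma mmul_mopp_r n A B : mmul n A (mopp B) = mopp (mmul n A B).
Proof. mx_pointwise rsum_opp. Qed.
Lemma mmul_mscal_l n c A B : mmul n (mscal c A) B = mscal c (mmul n A B).
Proof. mx_pointwise rsum_scal_l. Qed.
Lemma mmul_mscal_r n c A B : mmul n A (mscal c B) = mscal c (mmul n A B).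
Proof. mx_pointwise rsum_scal_l. Qed.

Lemma mtr_mmul n A B : mtr (mmul n A B) = mmul n (mtr B) (mtr A).
Proof. unfold mmul, mtr; do 2 (apply functional_extensionality; intro); apply rsum_ext; intros; ring. Qed.

Lemma mid_sym i j : mid i j = mid j i.
Proof. unfold mid; rewrite Nat.eqb_sym; reflexivity. Qed.

Lemma mid_shift a i j : mid (a + i)%nat (a + j)%nat = mid i j.
Proof. unfold mid; destruct (Nat.eqb_spec i j), (Nat.eqb_spec (a + i) (a + j)); auto; lia. Qed.

Lemma mmul_mid_l n A i j : (i < n)%nat -> mmul n mid A i j = A i j.
Proof.
  intros Hi; unfold mmul; rewrite (rsum_single n _ i Hi).
  - unfold mid; rewrite Nat.eqb_refl; ring.
  - intros k _ Hk; unfold mid; rewrite (proj2 (Nat.eqb_neq i k)) by auto; ring.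
Qed.

Lemma mmul_mid_r n A i j : (j < n)%nat -> mmul n A mid i j = A i j.
Proof.
  intros Hj; unfold mmul; rewrite (rsum_single n _ j Hj).
  - unfold mid; rewrite Nat.eqb_refl; ring.
  - intros k _ Hk; unfold mid; rewrite (proj2 (Nat.eqb_neq k j)) by auto; ring.
Qed.

Lemma mmul_ext_l n A A' B i j : (forall a b, (a < n)%nat -> (b < n)%nat -> A a b = A' a b) ->
  (i < n)%nat -> mmul n A B i j = mmul n A' B i j.
Proof. intros E Hi; unfold mmul; apply rsum_ext; intros; rewrite E; auto. Qed.

Lemma mmul_ext_r n A B B' i j : (forall a b, (a < n)%nat -> (b < n)%nat -> B a b = B' a b) ->
  (j < n)%nat -> mmul n A B i j = mmul n A B' i j.
Proof. intros E Hj; unfold mmul; apply rsum_ext; intros; rewrite E; auto. Qed.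

Definition is_inverse n (A B : Mat) :=
  forall i j, (i < n)%nat -> (j < n)%nat -> mmul n A B i j = mid i j.

Lemma is_inverse_mtr n A B : is_inverse n A B -> is_inverse n (mtr B) (mtr A).
Proof. intros HAB i j Hi Hj; rewrite <- mtr_mmul; unfold mtr at 1; rewrite HAB, mid_sym; auto. Qed.

Lemma is_inverse_swap n A B C : is_inverse n A B -> is_inverse n B C -> is_inverse n B A.
Proof.
  intros HAB HBC.
  assert (EA : forall a b, (a < n)%nat -> (b < n)%nat -> A a b = C a b).
  { intros a b Ha Hb.
    rewrite <- (mmul_mid_r n A a b Hb), (mmul_ext_r n A mid (mmul n B C)) by (auto; intros; symmetry; auto).
    rewrite <- mmul_assoc, (mmul_ext_l n _ mid) by (auto; intros; auto).
    apply mmul_mid_l; auto. }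
  intros i j Hi Hj; rewrite (mmul_ext_r n B A C); auto.
Qed.

Lemma mmul_mtr_sym n X Y S i j : (forall a b, (a < n)%nat -> (b < n)%nat -> S a b = S b a) ->
  (i < n)%nat -> (j < n)%nat ->
  mmul n (mmul n (mtr X) S) Y i j = mmul n (mmul n (mtr Y) S) X j i.
Proof.
  intros HS Hi Hj.
  change (mmul n (mmul n (mtr X) S) Y i j) with (mtr (mmul n (mmul n (mtr X) S) Y) j i).
  rewrite mtr_mmul, mtr_mmul, <- mmul_assoc.
  apply mmul_ext_l; auto; intros; apply mmul_ext_r; auto; intros; apply HS; auto.
Qed.

(** * The matrix exponential *)

Definition mnorm n (A : Mat) := rsum n (fun a => rsum n (fun b => Rabs (A a b))).

Lemma mnorm_ge0 n A : 0 <= mnorm n A.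
Proof. apply rsum_ge0; intros; apply rsum_ge0; intros; apply Rabs_pos. Qed.

Lemma col_norm_le_mnorm n A j : (j < n)%nat -> rsum n (fun l => Rabs (A l j)) <= mnorm n A.
Proof.
  intros Hj; unfold mnorm; rewrite rsum_swap.
  apply (rsum_term_le n (fun b => rsum n (fun a => Rabs (A a b)))); auto.
  intros; apply rsum_ge0; intros; apply Rabs_pos.
Qed.

Lemma mnorm_le_sub n A B : mnorm n A <= mnorm n B + mnorm n (msub A B).
Proof.
  unfold mnorm; rewrite <- rsum_plus; apply rsum_le; intros; rewrite <- rsum_plus.
  apply rsum_le; intros; unfold msub.
  replace (A k k0) with (B k k0 + (A k k0 - B k k0)) at 1 by ring; apply Rabs_triang.
Qed.

Lemma mnorm_mscal n c A : mnorm n (mscal c A) = Rabs c * mnorm n A.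
Proof.
  unfold mnorm, mscal; rewrite <- rsum_scal_l; apply rsum_ext; intros.
  rewrite <- rsum_scal_l; apply rsum_ext; intros; apply Rabs_mult.
Qed.

Lemma msub_mscal c A B : msub (mscal c A) (mscal c B) = mscal c (msub A B).
Proof. unfold msub, mscal; do 2 (apply functional_extensionality; intro); ring. Qed.

Lemma mpow_mscal n t A k : mpow n (mscal t A) k = mscal (t ^ k) (mpow n A k).
Proof.
  induction k; simpl.
  - unfold mscal; do 2 (apply functional_extensionality; intro); ring.
  - rewrite IHk, mmul_mscal_l, mmul_mscal_r; unfold mscal.
    do 2 (apply functional_extensionality; intro); ring.
Qed.

Lemma mpow_comm n A k i j : (i < n)%nat -> (j < n)%nat ->
  mmul n A (mpow n A k) i j = mmul n (mpow n A k) A i j.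
Proof.
  revert i j; induction k; intros i j Hi Hj; simpl.
  - rewrite mmul_mid_l, mmul_mid_r; auto.
  - rewrite <- mmul_assoc; apply mmul_ext_l; auto.
Qed.

Lemma Rabs_mpow_le n A k i j : (j < n)%nat -> Rabs (mpow n A k i j) <= mnorm n A ^ k.
Proof.
  revert i j; induction k; intros i j Hj; simpl.
  - unfold mid; destruct (Nat.eqb i j); rewrite ?Rabs_R1, ?Rabs_R0; lra.
  - unfold mmul; eapply Rle_trans; [apply Rabs_rsum_le|].
    apply Rle_trans with (rsum n (fun l => mnorm n A ^ k * Rabs (A l j))).
    + apply rsum_le; intros; rewrite Rabs_mult.
      apply Rmult_le_compat_r; [apply Rabs_pos | apply IHk; auto].
    + rewrite rsum_scal_l, Rmult_comm.
      apply Rmult_le_compat_r; [apply pow_le, mnorm_ge0 | apply col_norm_le_mnorm; auto].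
Qed.

Lemma Rabs_mpow_sub_le n A B r k i j : (j < n)%nat -> mnorm n A <= r -> mnorm n B <= r ->
  Rabs (mpow n A k i j - mpow n B k i j) <= INR k * mnorm n (msub A B) * r ^ (pred k).
Proof.
  intros Hj HA HB.
  assert (Hr : 0 <= r) by (pose proof (mnorm_ge0 n A); lra).
  set (d := mnorm n (msub A B)); assert (Hd : 0 <= d) by apply mnorm_ge0.
  revert i j Hj; induction k; intros i j Hj; simpl.
  - rewrite Rminus_diag, Rabs_R0; lra.
  - unfold mmul; rewrite <- rsum_minus.
    apply Rle_trans with
      (rsum n (fun l => INR k * d * r ^ (pred k) * Rabs (A l j) + r ^ k * Rabs (msub A B l j))).
    + eapply Rle_trans; [apply Rabs_rsum_le|]; apply rsum_le; intros l Hl.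
      replace (mpow n A k i l * A l j - mpow n B k i l * B l j) with
        ((mpow n A k i l - mpow n B k i l) * A l j + mpow n B k i l * msub A B l j)
        by (unfold msub; ring).
      eapply Rle_trans; [apply Rabs_triang|]; rewrite !Rabs_mult.
      apply Rplus_le_compat; apply Rmult_le_compat_r; try apply Rabs_pos; [apply IHk; auto|].
      eapply Rle_trans; [apply Rabs_mpow_le; auto|].
      apply pow_incr; split; [apply mnorm_ge0 | auto].
    + rewrite rsum_plus, !rsum_scal_l.
      assert (rsum n (fun l => Rabs (A l j)) <= r) by (eapply Rle_trans; [apply col_norm_le_mnorm|]; auto).
      assert (rsum n (fun l => Rabs (msub A B l j)) <= d) by (apply col_norm_le_mnorm; auto).
      assert (0 <= rsum n (fun l => Rabs (A l j))) by (apply rsum_ge0; intros; apply Rabs_pos).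
      assert (0 <= rsum n (fun l => Rabs (msub A B l j))) by (apply rsum_ge0; intros; apply Rabs_pos).
      assert (0 <= r ^ k) by (apply pow_le; auto).
      destruct k as [|k]; simpl pred in *; [simpl; nra|].
      replace (r ^ S k) with (r ^ k * r) by (simpl; ring).
      assert (0 <= INR (S k)) by apply pos_INR.
      assert (0 <= r ^ k) by (apply pow_le; auto).
      assert (INR (S k) * d * r ^ k * rsum n (fun l => Rabs (A l j)) <= INR (S k) * d * r ^ k * r)
        by (apply Rmult_le_compat_l; auto; repeat apply Rmult_le_pos; auto).
      assert (r ^ k * r * rsum n (fun l => Rabs (msub A B l j)) <= r ^ k * r * d)
        by (apply Rmult_le_compat_l; auto; apply Rmult_le_pos; auto).
      rewrite ?S_INR in *; nra.
Qed.

Lemma Un_cv_const c : Un_cv (fun _ => c) c.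
Proof. intros eps Heps; exists O; intros; unfold Rdist; rewrite Rminus_diag, Rabs_R0; auto. Qed.

Lemma Un_cv_Rabs_le u l c : Un_cv u l -> (forall K, Rabs (u K) <= c) -> Rabs l <= c.
Proof.
  intros Hu Hb; destruct (Rle_dec (Rabs l) c) as [|Hn]; auto; exfalso.
  destruct (Hu (Rabs l - c)) as [K HK]; [lra|]; specialize (HK K (le_n _)); unfold Rdist in HK.
  pose proof (Hb K); pose proof (Rabs_triang_inv l (u K)).
  rewrite <- Rabs_Ropp, Ropp_minus_distr in HK; lra.
Qed.

Lemma rsum_Un_cv n u L : (forall l, (l < n)%nat -> Un_cv (u l) (L l)) ->
  Un_cv (fun K => rsum n (fun l => u l K)) (rsum n L).
Proof.
  induction n; intros Hu; simpl; [apply Un_cv_const|].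
  apply CV_plus; [apply IHn; intros|]; apply Hu; lia.
Qed.

Lemma sum_f_R0_rsum K n f :
  sum_f_R0 (fun k => rsum n (fun l => f k l)) K = rsum n (fun l => sum_f_R0 (fun k => f k l) K).
Proof. induction K; simpl; auto; rewrite IHK, <- rsum_plus; auto. Qed.

Lemma sum_f_R0_scal_l K c a : sum_f_R0 (fun k => c * a k) K = c * sum_f_R0 a K.
Proof. induction K; simpl; auto; rewrite IHK; ring. Qed.

Lemma sum_f_R0_scal_r K c a : sum_f_R0 (fun k => a k * c) K = sum_f_R0 a K * c.
Proof. induction K; simpl; auto; rewrite IHK; ring. Qed.

Lemma exp_Un_cv x : Un_cv (fun K => sum_f_R0 (fun k => / INR (fact k) * x ^ k) K) (exp x).
Proof. unfold exp; destruct (exist_exp x) as [l Hl]; exact Hl. Qed.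

Lemma exp_le_compat x y : x <= y -> exp x <= exp y.
Proof. intros [Hlt | ->]; [left; apply exp_increasing; auto | right; reflexivity]. Qed.

Lemma inv_fact_pos k : 0 < / INR (fact k).
Proof. apply Rinv_0_lt_compat, INR_fact_lt_0. Qed.

Lemma exp_partial_sum_le x K : 0 <= x -> sum_f_R0 (fun k => / INR (fact k) * x ^ k) K <= exp x.
Proof.
  intros Hx; apply sum_incr; [apply exp_Un_cv|].
  intros; apply Rmult_le_pos; [left; apply inv_fact_pos | apply pow_le; auto].
Qed.

Lemma INR_S_div_fact k : INR (S k) / INR (fact (S k)) = / INR (fact k).
Proof.
  change (fact (S k)) with (S k * fact k)%nat; rewrite mult_INR.
  pose proof (INR_fact_lt_0 k); pose proof (lt_0_INR (S k) (Nat.lt_0_succ k)); field; lra.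
Qed.

Lemma Rabs_mpow_div_fact_le n A k i j : (j < n)%nat ->
  Rabs (mpow n A k i j / INR (fact k)) <= / INR (fact k) * mnorm n A ^ k.
Proof.
  intros Hj; unfold Rdiv; rewrite Rabs_mult, Rmult_comm, (Rabs_right (/ _)) by (left; apply inv_fact_pos).
  apply Rmult_le_compat_l; [left; apply inv_fact_pos | apply Rabs_mpow_le; auto].
Qed.

Lemma mexp_Un_cv n A i j : (j < n)%nat ->
  Un_cv (fun K => sum_f_R0 (fun k => mpow n A k i j / INR (fact k)) K) (mexp n A i j).
Proof.
  intros Hj; set (a := fun k => mpow n A k i j / INR (fact k)).
  assert (Habs : {l | Un_cv (fun K => sum_f_R0 (fun k => Rabs (a k)) K) l}).
  { apply Rseries_CV_comp with (fun k => / INR (fact k) * mnorm n A ^ k).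
    - intros k; split; [apply Rabs_pos | apply Rabs_mpow_div_fact_le; auto].
    - exists (exp (mnorm n A)); apply exp_Un_cv. }
  destruct (R_complete _ (cauchy_abs a (CV_Cauchy _ Habs))) as [l Hl].
  unfold mexp; apply epsilon_spec; exists l; exact Hl.
Qed.

Lemma Rabs_mexp_le n A i j : (j < n)%nat -> Rabs (mexp n A i j) <= exp (mnorm n A).
Proof.
  intros Hj; eapply Un_cv_Rabs_le; [apply mexp_Un_cv; auto|]; intros K.
  eapply Rle_trans; [apply sum_f_R0_triangle|].
  eapply Rle_trans; [|apply (exp_partial_sum_le _ K), mnorm_ge0].
  apply sum_Rle; intros; apply Rabs_mpow_div_fact_le; auto.
Qed.

Lemma sum_derived_exp_le K r : 0 <= r ->
  sum_f_R0 (fun k => INR k * r ^ (pred k) / INR (fact k)) K <= exp r.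
Proof.
  intros Hr; destruct K.
  - simpl; replace (0 * 1 / 1) with 0 by field; left; apply exp_pos.
  - rewrite decomp_sum by lia; simpl pred.
    replace (INR 0 * r ^ 0 / INR (fact 0)) with 0 by (simpl; field); rewrite Rplus_0_l.
    eapply Rle_trans; [|apply (exp_partial_sum_le r K Hr)]; right; apply sum_eq; intros.
    simpl pred; rewrite <- INR_S_div_fact; unfold Rdiv; ring.
Qed.

Lemma Rabs_mexp_sub_le n A B r i j : (j < n)%nat -> mnorm n A <= r -> mnorm n B <= r ->
  Rabs (mexp n A i j - mexp n B i j) <= mnorm n (msub A B) * exp r.
Proof.
  intros Hj HA HB; assert (Hr : 0 <= r) by (pose proof (mnorm_ge0 n A); lra).
  eapply Un_cv_Rabs_le; [apply CV_minus; apply mexp_Un_cv; auto|]; intros K; cbv beta.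
  rewrite <- minus_sum; eapply Rle_trans; [apply sum_f_R0_triangle|].
  eapply Rle_trans with
    (sum_f_R0 (fun k => mnorm n (msub A B) * (INR k * r ^ (pred k) / INR (fact k))) K).
  - apply sum_Rle; intros k _.
    replace (mpow n A k i j / INR (fact k) - mpow n B k i j / INR (fact k))
      with ((mpow n A k i j - mpow n B k i j) * / INR (fact k)) by (unfold Rdiv; ring).
    rewrite Rabs_mult, (Rabs_right (/ _)) by (left; apply inv_fact_pos).
    replace (mnorm n (msub A B) * (INR k * r ^ pred k / INR (fact k)))
      with (INR k * mnorm n (msub A B) * r ^ pred k * / INR (fact k)) by (unfold Rdiv; ring).
    apply Rmult_le_compat_r; [left; apply inv_fact_pos | apply Rabs_mpow_sub_le; auto].
  - rewrite sum_f_R0_scal_l; apply Rmult_le_compat_l; [apply mnorm_ge0 | apply sum_derived_exp_le; auto].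
Qed.

Lemma mexp_mmul_r_Un_cv n A X i j : (i < n)%nat ->
  Un_cv (fun K => sum_f_R0 (fun k => mmul n (mpow n A k) X i j / INR (fact k)) K) (mmul n (mexp n A) X i j).
Proof.
  intros Hi; unfold mmul at 2.
  eapply Un_cv_ext;
    [|apply (rsum_Un_cv n (fun l K => sum_f_R0 (fun k => mpow n A k i l / INR (fact k)) K * X l j))].
  - intros K; cbv beta.
    rewrite (rsum_ext n _ (fun l => sum_f_R0 (fun k => mpow n A k i l / INR (fact k) * X l j) K))
      by (intros; symmetry; apply sum_f_R0_scal_r).
    rewrite <- sum_f_R0_rsum; apply sum_eq; intros; unfold mmul, Rdiv.
    rewrite <- rsum_scal_r; apply rsum_ext; intros; ring.
  - intros l Hl; apply CV_mult; [apply mexp_Un_cv; auto | apply Un_cv_const].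
Qed.

Lemma mexp_mmul_l_Un_cv n A X i j : (j < n)%nat ->
  Un_cv (fun K => sum_f_R0 (fun k => mmul n X (mpow n A k) i j / INR (fact k)) K) (mmul n X (mexp n A) i j).
Proof.
  intros Hj; unfold mmul at 2.
  eapply Un_cv_ext;
    [|apply (rsum_Un_cv n (fun l K => X i l * sum_f_R0 (fun k => mpow n A k l j / INR (fact k)) K))].
  - intros K; cbv beta.
    rewrite (rsum_ext n _ (fun l => sum_f_R0 (fun k => X i l * (mpow n A k l j / INR (fact k))) K))
      by (intros; symmetry; apply sum_f_R0_scal_l).
    rewrite <- sum_f_R0_rsum; apply sum_eq; intros; unfold mmul, Rdiv.
    rewrite <- rsum_scal_r; apply rsum_ext; intros; ring.
  - intros l Hl; apply CV_mult; [apply Un_cv_const | apply mexp_Un_cv; auto].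
Qed.

Definition mexpt n A t := mexp n (mscal t A).

Lemma mexpt_comm n A t i j : (i < n)%nat -> (j < n)%nat ->
  mmul n (mexpt n A t) A i j = mmul n A (mexpt n A t) i j.
Proof.
  intros Hi Hj; eapply UL_sequence; [apply mexp_mmul_r_Un_cv; auto|].
  eapply Un_cv_ext; [|apply mexp_mmul_l_Un_cv; auto]; intros K; apply sum_eq; intros.
  rewrite mpow_mscal, mmul_mscal_l, mmul_mscal_r; unfold mscal; rewrite mpow_comm; auto.
Qed.

Lemma mexpt0 n A i j : (j < n)%nat -> mexpt n A 0 i j = mid i j.
Proof.
  intros Hj; eapply UL_sequence; [apply mexp_Un_cv; auto|].
  eapply Un_cv_ext; [|apply Un_cv_const]; intros K; induction K.
  - simpl; field.
  - rewrite tech5, <- IHK, mpow_mscal; unfold mscal; rewrite pow_i by lia; unfold Rdiv; ring.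
Qed.

(* The entry (i, j) of exp(tA) is the power series with coefficients c k = A^k_ij / k!;
   term-wise differentiation is justified by normal convergence on every ball. *)
Section MexptDerivative.
Variables (n : nat) (A : Mat) (i j : nat).
Hypotheses (Hi : (i < n)%nat) (Hj : (j < n)%nat).

Let c k := mpow n A k i j / INR (fact k).
Let derived k (x : R) := INR (S k) * c (S k) * x ^ k.

Lemma derived_term_eq k x : derived k x = mpow n A (S k) i j / INR (fact k) * x ^ k.
Proof.
  unfold derived, c; change (fact (S k)) with (S k * fact k)%nat; rewrite mult_INR.
  field; split; [apply INR_fact_neq_0 | apply not_0_INR; lia].
Qed.

Lemma derived_series_CVN (r : posreal) : CVN_r derived r.
Proof.
  set (rho := mnorm n A); assert (Hrho : 0 <= rho) by apply mnorm_ge0.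
  exists (fun k => rho * (/ INR (fact k) * (rho * r) ^ k)), (rho * exp (rho * r)); split.
  - eapply Un_cv_ext; [|apply (CV_mult _ _ _ _ (Un_cv_const rho) (exp_Un_cv (rho * r)))].
    intros K; cbv beta; rewrite <- sum_f_R0_scal_l; apply sum_eq; intros k _.
    rewrite Rabs_right; [reflexivity|].
    apply Rle_ge, Rmult_le_pos; [auto | apply Rmult_le_pos; [left; apply inv_fact_pos|]].
    apply pow_le, Rmult_le_pos; [auto | left; apply cond_pos].
  - intros k y Hy; unfold Boule in Hy; rewrite Rminus_0_r in Hy.
    rewrite derived_term_eq, Rabs_mult, <- RPow_abs, Rpow_mult_distr.
    replace (rho * (/ INR (fact k) * (rho ^ k * r ^ k)))
      with (/ INR (fact k) * rho ^ S k * r ^ k) by (simpl; ring).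
    apply Rmult_le_compat; try apply Rabs_pos; try apply pow_le, Rabs_pos.
    + unfold Rdiv; rewrite Rabs_mult, Rmult_comm, (Rabs_right (/ _)) by (left; apply inv_fact_pos).
      apply Rmult_le_compat_l; [left; apply inv_fact_pos | apply Rabs_mpow_le; auto].
    + apply pow_incr; split; [apply Rabs_pos | lra].
Qed.

Lemma mexpt_derivable_pt_lim t :
  derivable_pt_lim (fun x => mexpt n A x i j) t (mmul n (mexpt n A t) A i j).
Proof.
  set (cv := CVN_R_CVS derived derived_series_CVN).
  set (d := mkposreal (Rabs t + 1) (Rle_lt_0_plus_1 _ (Rabs_pos t))).
  apply (CVU_derivable (fun K x => sum_f_R0 (fun k => c k * x ^ k) (S K)) (fun K x => SP derived K x)
           (fun x => mexpt n A x i j) (fun x => mmul n (mexpt n A x) A i j) 0 d).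
  - apply CVU_ext_lim with (SFL derived cv); [apply CVN_CVU, derived_series_CVN|].
    intros x _; unfold SFL; destruct (cv x) as [l Hl]; eapply UL_sequence; [apply Hl|].
    eapply Un_cv_ext; [|apply mexp_mmul_r_Un_cv; auto]; intros K; unfold SP; apply sum_eq; intros k _.
    rewrite derived_term_eq, mpow_mscal, mmul_mscal_l; unfold mscal.
    change (mpow n A (S k)) with (mmul n (mpow n A k) A); unfold Rdiv; ring.
  - intros x _.
    assert (Hser : Un_cv (fun K => sum_f_R0 (fun k => c k * x ^ k) K) (mexpt n A x i j)).
    { eapply Un_cv_ext; [|apply mexp_Un_cv; auto]; intros K; apply sum_eq; intros k _.
      unfold c; rewrite mpow_mscal; unfold mscal, Rdiv; ring. }
    intros eps Heps; destruct (Hser eps Heps) as [K HK]; exists K; intros; apply HK; lia.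
  - intros K x _; exact (derivable_pt_lim_fs c x (S K) (Nat.lt_0_succ K)).
  - unfold Boule; simpl; rewrite Rminus_0_r; lra.
Qed.

End MexptDerivative.

Lemma derivable_pt_lim_ext f g x l : (forall t, f t = g t) -> derivable_pt_lim f x l -> derivable_pt_lim g x l.
Proof. intros E; replace g with f; auto; apply functional_extensionality; auto. Qed.

Lemma derivable_pt_lim_eq_val f x l l' : l' = l -> derivable_pt_lim f x l' -> derivable_pt_lim f x l.
Proof. intros ->; auto. Qed.

Lemma continuity_pt_cst (c x : R) : continuity_pt (fun _ => c) x.
Proof. apply continuity_pt_const; intros u v; reflexivity. Qed.

Lemma derivable_pt_lim_rsum n f f' x : (forall k, (k < n)%nat -> derivable_pt_lim (f k) x (f' k)) ->
  derivable_pt_lim (fun t => rsum n (fun k => f k t)) x (rsum n f').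
Proof.
  induction n; intros Hf; simpl; [apply derivable_pt_lim_const|].
  apply (derivable_pt_lim_plus (fun t => rsum n (fun k => f k t)) (f n));
    [apply IHn; intros|]; apply Hf; lia.
Qed.

Lemma continuity_pt_rsum n f x : (forall k, (k < n)%nat -> continuity_pt (f k) x) ->
  continuity_pt (fun t => rsum n (fun k => f k t)) x.
Proof.
  induction n; intros Hf; simpl; [apply continuity_pt_cst|].
  apply (continuity_pt_plus (fun t => rsum n (fun k => f k t)) (f n)); [apply IHn; intros|]; apply Hf; lia.
Qed.

Lemma derivable_pt_lim_mmul n X Y X' Y' x i j :
  (forall a b, (a < n)%nat -> (b < n)%nat -> derivable_pt_lim (fun t => X t a b) x (X' a b)) ->
  (forall a b, (a < n)%nat -> (b < n)%nat -> derivable_pt_lim (fun t => Y t a b) x (Y' a b)) ->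
  (i < n)%nat -> (j < n)%nat ->
  derivable_pt_lim (fun t => mmul n (X t) (Y t) i j) x (mmul n X' (Y x) i j + mmul n (X x) Y' i j).
Proof.
  intros HX HY Hi Hj; unfold mmul; rewrite <- rsum_plus.
  apply (derivable_pt_lim_rsum n (fun k t => X t i k * Y t k j)); intros.
  apply (derivable_pt_lim_mult (fun t => X t i k) (fun t => Y t k j)); auto.
Qed.

Lemma continuity_pt_mmul n X Y x i j :
  (forall a b, (a < n)%nat -> (b < n)%nat -> continuity_pt (fun t => X t a b) x) ->
  (forall a b, (a < n)%nat -> (b < n)%nat -> continuity_pt (fun t => Y t a b) x) ->
  (i < n)%nat -> (j < n)%nat -> continuity_pt (fun t => mmul n (X t) (Y t) i j) x.
Proof.
  intros HX HY Hi Hj; unfold mmul; apply (continuity_pt_rsum n (fun k t => X t i k * Y t k j)); intros.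
  apply (continuity_pt_mult (fun t => X t i k) (fun t => Y t k j)); auto.
Qed.

Definition mx_continuous n (X : R -> Mat) :=
  forall t a b, (a < n)%nat -> (b < n)%nat -> continuity_pt (fun s => X s a b) t.

Lemma mx_continuous_entry n X t a b : mx_continuous n X -> (a < n)%nat -> (b < n)%nat ->
  continuity_pt (fun s => X s a b) t.
Proof. intros HX; apply HX. Qed.

Lemma mx_continuous_const n C : mx_continuous n (fun _ => C).
Proof. intros t a b _ _; apply continuity_pt_cst. Qed.

Lemma mx_continuous_mtr n X : mx_continuous n X -> mx_continuous n (fun s => mtr (X s)).
Proof. intros HX t a b Ha Hb; apply HX; auto. Qed.

Lemma mx_continuous_mopp n X : mx_continuous n X -> mx_continuous n (fun s => mopp (X s)).
Proof. intros HX t a b Ha Hb; apply (continuity_pt_opp (fun s => X s a b)); auto. Qed.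

Lemma mx_continuous_madd n X Y : mx_continuous n X -> mx_continuous n Y ->
  mx_continuous n (fun s => madd (X s) (Y s)).
Proof. intros HX HY t a b Ha Hb; apply (continuity_pt_plus (fun s => X s a b) (fun s => Y s a b)); auto. Qed.

Lemma mx_continuous_mmul n X Y : mx_continuous n X -> mx_continuous n Y ->
  mx_continuous n (fun s => mmul n (X s) (Y s)).
Proof. intros HX HY t a b Ha Hb; apply continuity_pt_mmul; auto. Qed.

Section MatrixExponential.
Variables (n : nat) (A : Mat).

Lemma mexpt_derivable_pt_lim_l t i j : (i < n)%nat -> (j < n)%nat ->
  derivable_pt_lim (fun x => mexpt n A x i j) t (mmul n A (mexpt n A t) i j).
Proof. intros; rewrite <- mexpt_comm; auto; apply mexpt_derivable_pt_lim; auto. Qed.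

Lemma mexpt_opp_derivable_pt_lim t i j : (i < n)%nat -> (j < n)%nat ->
  derivable_pt_lim (fun x => mexpt n A (- x) i j) t (- mmul n A (mexpt n A (- t)) i j).
Proof.
  intros; replace (- mmul n A (mexpt n A (- t)) i j) with (mmul n A (mexpt n A (- t)) i j * - (1)) by ring.
  apply (derivable_pt_lim_comp Ropp (fun x => mexpt n A x i j)).
  - apply (derivable_pt_lim_opp id), derivable_pt_lim_id.
  - apply mexpt_derivable_pt_lim_l; auto.
Qed.

Lemma mexpt_inverse t : is_inverse n (mexpt n A t) (mexpt n A (- t)).
Proof.
  intros i j Hi Hj; set (f := fun x => mmul n (mexpt n A x) (mexpt n A (- x)) i j).
  assert (Hd : forall x, derivable_pt_lim f x 0).
  { intros x; apply derivable_pt_lim_eq_val with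
      (mmul n (mmul n (mexpt n A x) A) (mexpt n A (- x)) i j
       + mmul n (mexpt n A x) (mopp (mmul n A (mexpt n A (- x)))) i j).
    - rewrite mmul_mopp_r, <- mmul_assoc; unfold mopp; ring.
    - apply (derivable_pt_lim_mmul n (mexpt n A) (fun t => mexpt n A (- t))); auto; intros;
        [apply mexpt_derivable_pt_lim | apply mexpt_opp_derivable_pt_lim]; auto. }
  assert (Hc : constant f) by (apply (null_derivative_1 f (fun x => exist _ 0 (Hd x))); reflexivity).
  change (f t = mid i j); rewrite (Hc t 0); unfold f; rewrite Ropp_0.
  rewrite (mmul_ext_r n _ _ mid), mmul_mid_r; auto; [apply mexpt0 | intros; apply mexpt0]; auto.
Qed.

End MatrixExponential.

Section LowerLeftBlock.
Variables (n p : nat) (A : Mat).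
Hypothesis lower_left0 : forall i l, (p <= i)%nat -> (l < p)%nat -> A i l = 0.

Lemma mpow_lower_left0 q i l : (p <= i)%nat -> (l < p)%nat -> mpow n A q i l = 0.
Proof.
  revert i l; induction q; intros i l Hi Hl; simpl.
  - unfold mid; rewrite (proj2 (Nat.eqb_neq i l)) by lia; reflexivity.
  - unfold mmul; apply rsum_eq0; intros r Hr; destruct (Nat.lt_ge_cases r p).
    + rewrite IHq; auto; ring.
    + rewrite lower_left0; auto; ring.
Qed.

Lemma mexpt_lower_left0 t i l : (l < n)%nat -> (p <= i)%nat -> (l < p)%nat -> mexpt n A t i l = 0.
Proof.
  intros Hn Hi Hl; eapply UL_sequence; [apply mexp_Un_cv; auto|].
  eapply Un_cv_ext; [|apply Un_cv_const]; intros K; symmetry; apply sum_eq_R0; intros k _.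
  rewrite mpow_mscal; unfold mscal; rewrite mpow_lower_left0 by auto; unfold Rdiv; ring.
Qed.

End LowerLeftBlock.

(** * Riemann integrals *)

Lemma Rint_RiemannInt f a b (pr : Riemann_integrable f a b) : Rint f a b = RiemannInt pr.
Proof.
  unfold Rint.
  destruct (epsilon_spec (inhabits 0) (fun l => exists pr : Riemann_integrable f a b, RiemannInt pr = l)
              (ex_intro _ (RiemannInt pr) (ex_intro _ pr eq_refl))) as [pr' <-].
  apply RiemannInt_P5.
Qed.

Lemma Rint_primitive F f a b : (forall x, derivable_pt_lim F x (f x)) -> continuity f -> a <= b ->
  Rint f a b = F b - F a.
Proof.
  intros Hd Hc Hab.
  set (dF := fun x => exist (fun l => derivable_pt_lim F x l) (f x) (Hd x) : derivable_pt F x).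
  assert (pr : Riemann_integrable f a b) by (apply continuity_implies_RiemannInt; auto).
  rewrite (Rint_RiemannInt f a b pr); exact (@FTC_Riemann (@mkC1 F dF Hc) a b pr).
Qed.

Section RintLinear.
Variables (a b : R).
Hypothesis Hab : a <= b.
Let cont f := forall x, a <= x <= b -> continuity_pt f x.

Lemma Rint_ext f g : (forall x, a <= x <= b -> f x = g x) -> cont f -> cont g -> Rint f a b = Rint g a b.
Proof.
  intros E Hf Hg.
  assert (prf : Riemann_integrable f a b) by (apply continuity_implies_RiemannInt; auto).
  assert (prg : Riemann_integrable g a b) by (apply continuity_implies_RiemannInt; auto).
  rewrite (Rint_RiemannInt f a b prf), (Rint_RiemannInt g a b prg).
  apply RiemannInt_P18; auto; intros; apply E; lra.
Qed.

Lemma continuity_pt_scal c f x : continuity_pt f x -> continuity_pt (fun s => c * f s) x.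
Proof. intros; apply (continuity_pt_mult (fun _ => c) f); auto; apply continuity_pt_cst. Qed.

Lemma Rint_lin f g l : cont f -> cont g -> Rint (fun x => f x + l * g x) a b = Rint f a b + l * Rint g a b.
Proof.
  intros Hf Hg.
  assert (prf : Riemann_integrable f a b) by (apply continuity_implies_RiemannInt; auto).
  assert (prg : Riemann_integrable g a b) by (apply continuity_implies_RiemannInt; auto).
  assert (pr : Riemann_integrable (fun x => f x + l * g x) a b).
  { apply continuity_implies_RiemannInt; auto; intros.
    apply (continuity_pt_plus f (fun x => l * g x)); auto; apply continuity_pt_scal; auto. }
  rewrite (Rint_RiemannInt _ _ _ prf), (Rint_RiemannInt _ _ _ prg), (Rint_RiemannInt _ _ _ pr).
  apply RiemannInt_P13.
Qed.

Lemma Rint_plus f g : cont f -> cont g -> Rint (fun x => f x + g x) a b = Rint f a b + Rint g a b.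
Proof.
  intros Hf Hg; rewrite (Rint_ext _ (fun x => f x + 1 * g x)), Rint_lin; auto; try (intros; ring).
  - intros x Hx; apply (continuity_pt_plus f g); auto.
  - intros x Hx; apply (continuity_pt_plus f (fun x => 1 * g x)); auto; apply continuity_pt_scal; auto.
Qed.

Lemma Rint_scal f c : cont f -> Rint (fun x => c * f x) a b = c * Rint f a b.
Proof.
  intros Hf; rewrite (Rint_ext _ (fun x => f x + (c - 1) * f x)), Rint_lin; auto; try (intros; ring).
  - intros x Hx; apply continuity_pt_scal; auto.
  - intros x Hx; apply (continuity_pt_plus f (fun x => (c - 1) * f x)); auto; apply continuity_pt_scal; auto.
Qed.

Lemma Rint_minus f g : cont f -> cont g -> Rint (fun x => f x - g x) a b = Rint f a b - Rint g a b.
Proof.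
  intros Hf Hg; rewrite (Rint_ext _ (fun x => f x + (-1) * g x)), Rint_lin; auto; try (intros; ring).
  - intros x Hx; apply (continuity_pt_minus f g); auto.
  - intros x Hx; apply (continuity_pt_plus f (fun x => -1 * g x)); auto; apply continuity_pt_scal; auto.
Qed.

Lemma Rint_opp f : cont f -> Rint (fun x => - f x) a b = - Rint f a b.
Proof.
  intros Hf; rewrite (Rint_ext _ (fun x => -1 * f x)), Rint_scal; auto; try (intros; ring).
  - intros x Hx; apply (continuity_pt_opp f); auto.
  - intros x Hx; apply continuity_pt_scal; auto.
Qed.

Lemma Rabs_Rint_le f c : cont f -> (forall x, a <= x <= b -> Rabs (f x) <= c) -> Rabs (Rint f a b) <= c * (b - a).
Proof.
  intros Hf Hb; assert (pr : Riemann_integrable f a b) by (apply continuity_implies_RiemannInt; auto).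
  rewrite (Rint_RiemannInt _ _ _ pr).
  eapply Rle_trans; [apply (RiemannInt_P17 pr (RiemannInt_P16 pr)); auto|].
  refine (proj2 (@RiemannInt_const_bound (fun x => Rabs (f x)) a b 0 c (RiemannInt_P16 pr) Hab _)).
  intros; split; [apply Rabs_pos | apply Hb; lra].
Qed.

End RintLinear.

(** * Limits uniform in a second variable *)

Section UniformLimits.
Variable T : R.

Definition bounded_on (L : R -> R) := exists C, forall s, 0 <= s <= T -> Rabs (L s) <= C.

(* The limit is also required to be bounded, so that limits of products are products of limits. *)
Definition unif_lim (f : R -> R -> R) (L : R -> R) :=
  bounded_on L /\
  forall eps, 0 < eps -> exists del, 0 < del /\
    forall h, h <> 0 -> Rabs h < del -> forall s, 0 <= s <= T -> Rabs (f h s - L s) < eps.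

Lemma bounded_on_ge0 L : bounded_on L -> exists C, 0 <= C /\ forall s, 0 <= s <= T -> Rabs (L s) <= C.
Proof.
  intros [C HC]; exists (Rabs C); split; [apply Rabs_pos|].
  intros; eapply Rle_trans; [apply HC; auto | apply RRle_abs].
Qed.

Lemma bounded_on_const c : bounded_on (fun _ => c).
Proof. exists (Rabs c); intros; lra. Qed.

Lemma bounded_on_plus f g : bounded_on f -> bounded_on g -> bounded_on (fun s => f s + g s).
Proof.
  intros [C1 H1] [C2 H2]; exists (C1 + C2); intros s Hs.
  eapply Rle_trans; [apply Rabs_triang|]; specialize (H1 s Hs); specialize (H2 s Hs); lra.
Qed.

Lemma bounded_on_mult f g : bounded_on f -> bounded_on g -> bounded_on (fun s => f s * g s).
Proof.
  intros H1 H2; destruct (bounded_on_ge0 _ H1) as [C1 [P1 B1]], (bounded_on_ge0 _ H2) as [C2 [P2 B2]].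
  exists (C1 * C2); intros; rewrite Rabs_mult; apply Rmult_le_compat; auto; apply Rabs_pos.
Qed.

Lemma bounded_on_ext f g : (forall s, 0 <= s <= T -> f s = g s) -> bounded_on f -> bounded_on g.
Proof. intros E [C HC]; exists C; intros; rewrite <- E; auto. Qed.

Lemma unif_lim_ext f g L : (forall h s, h <> 0 -> 0 <= s <= T -> f h s = g h s) ->
  unif_lim f L -> unif_lim g L.
Proof.
  intros E [HB HL]; split; auto; intros eps Heps.
  destruct (HL eps Heps) as [d [Hd Hh]]; exists d; split; auto; intros; rewrite <- E; auto.
Qed.

Lemma unif_lim_ext_lim f L L' : (forall s, 0 <= s <= T -> L s = L' s) -> unif_lim f L -> unif_lim f L'.
Proof.
  intros E [HB HL]; split; [eapply bounded_on_ext; eauto|]; intros eps Heps.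
  destruct (HL eps Heps) as [d [Hd Hh]]; exists d; split; auto; intros; rewrite <- E; auto.
Qed.

Lemma unif_lim_const L : bounded_on L -> unif_lim (fun _ s => L s) L.
Proof.
  intros HB; split; auto; intros eps Heps; exists 1; split; [lra|].
  intros; rewrite Rminus_diag, Rabs_R0; auto.
Qed.

Lemma unif_lim_id : unif_lim (fun h _ => h) (fun _ => 0).
Proof.
  split; [apply bounded_on_const|]; intros eps Heps; exists eps; split; auto.
  intros; rewrite Rminus_0_r; auto.
Qed.

Lemma unif_lim_plus f g F G : unif_lim f F -> unif_lim g G ->
  unif_lim (fun h s => f h s + g h s) (fun s => F s + G s).
Proof.
  intros [BF HF] [BG HG]; split; [apply bounded_on_plus; auto|]; intros eps Heps.
  destruct (HF (eps / 2)) as [d1 [Hd1 H1]]; [lra|]; destruct (HG (eps / 2)) as [d2 [Hd2 H2]]; [lra|].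
  exists (Rmin d1 d2); split; [apply Rmin_pos; auto|]; intros h Hh Hhd s Hs.
  specialize (H1 h Hh (Rlt_le_trans _ _ _ Hhd (Rmin_l _ _)) s Hs).
  specialize (H2 h Hh (Rlt_le_trans _ _ _ Hhd (Rmin_r _ _)) s Hs).
  replace (f h s + g h s - (F s + G s)) with ((f h s - F s) + (g h s - G s)) by ring.
  eapply Rle_lt_trans; [apply Rabs_triang | lra].
Qed.

Lemma unif_lim_opp f F : unif_lim f F -> unif_lim (fun h s => - f h s) (fun s => - F s).
Proof.
  intros [[C BF] HF]; split; [exists C; intros; rewrite Rabs_Ropp; auto|]; intros eps Heps.
  destruct (HF eps Heps) as [d [Hd Hh]]; exists d; split; auto; intros.
  replace (- f h s - - F s) with (- (f h s - F s)) by ring; rewrite Rabs_Ropp; auto.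
Qed.

Lemma unif_lim_mult f g F G : unif_lim f F -> unif_lim g G ->
  unif_lim (fun h s => f h s * g h s) (fun s => F s * G s).
Proof.
  intros [BF HF] [BG HG]; split; [apply bounded_on_mult; auto|]; intros eps Heps.
  destruct (bounded_on_ge0 _ BF) as [CF [PF BF']], (bounded_on_ge0 _ BG) as [CG [PG BG']].
  set (e := Rmin 1 (eps / (CF + CG + 2))).
  assert (He : 0 < e) by (apply Rmin_pos; [lra | apply Rdiv_lt_0_compat; lra]).
  assert (He1 : e <= 1) by apply Rmin_l.
  assert (He2 : e * (CF + CG + 2) <= eps).
  { assert (e <= eps / (CF + CG + 2)) by apply Rmin_r.
    apply Rmult_le_compat_r with (r := CF + CG + 2) in H; [|lra].
    unfold Rdiv in H; rewrite Rmult_assoc, Rinv_l in H; lra. }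
  destruct (HF e He) as [d1 [Hd1 H1]], (HG e He) as [d2 [Hd2 H2]].
  exists (Rmin d1 d2); split; [apply Rmin_pos; auto|]; intros h Hh Hhd s Hs.
  specialize (H1 h Hh (Rlt_le_trans _ _ _ Hhd (Rmin_l _ _)) s Hs).
  specialize (H2 h Hh (Rlt_le_trans _ _ _ Hhd (Rmin_r _ _)) s Hs).
  specialize (BF' s Hs); specialize (BG' s Hs).
  replace (f h s * g h s - F s * G s) with ((f h s - F s) * g h s + F s * (g h s - G s)) by ring.
  eapply Rle_lt_trans; [apply Rabs_triang|]; rewrite !Rabs_mult.
  assert (Rabs (g h s) <= CG + e).
  { replace (g h s) with (G s + (g h s - G s)) by ring; eapply Rle_trans; [apply Rabs_triang | lra]. }
  assert (Rabs (f h s - F s) * Rabs (g h s) <= e * (CG + 1)) by (apply Rmult_le_compat; auto using Rabs_pos; lra).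
  assert (Rabs (F s) * Rabs (g h s - G s) <= CF * e) by (apply Rmult_le_compat; auto using Rabs_pos; lra).
  nra.
Qed.

Lemma unif_lim_rsum n f F : (forall k, (k < n)%nat -> unif_lim (f k) (F k)) ->
  unif_lim (fun h s => rsum n (fun k => f k h s)) (fun s => rsum n (fun k => F k s)).
Proof.
  induction n; intros Hf; simpl; [apply (unif_lim_const (fun _ => 0)), bounded_on_const|].
  apply (unif_lim_plus (fun h s => rsum n (fun k => f k h s)) (f n) (fun s => rsum n (fun k => F k s)) (F n));
    [apply IHn; intros|]; apply Hf; lia.
Qed.

Definition unif_derivable (phi : R -> R -> R) (l : R) (psi : R -> R) :=
  unif_lim (fun h s => (phi (l + h) s - phi l s) / h) psi /\ bounded_on (phi l).

Lemma unif_derivable_unif_lim phi l psi : unif_derivable phi l psi -> unif_lim (fun h s => phi (l + h) s) (phi l).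
Proof.
  intros [HU HB]; apply unif_lim_ext_lim with (fun s => phi l s + 0 * psi s); [intros; ring|].
  apply unif_lim_ext with (fun h s => phi l s + h * ((phi (l + h) s - phi l s) / h)); [intros; field; auto|].
  apply unif_lim_plus; [apply unif_lim_const; auto|].
  apply (unif_lim_mult (fun h _ => h) _ (fun _ => 0)); auto; apply unif_lim_id.
Qed.

Lemma unif_derivable_mult phi1 psi1 phi2 psi2 l :
  unif_derivable phi1 l psi1 -> unif_derivable phi2 l psi2 ->
  unif_derivable (fun mu s => phi1 mu s * phi2 mu s) l (fun s => psi1 s * phi2 l s + phi1 l s * psi2 s).
Proof.
  intros G1 G2; pose proof (unif_derivable_unif_lim _ _ _ G2) as C2.
  destruct G1 as [U1 B1], G2 as [U2 B2]; split; [|apply bounded_on_mult; auto].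
  apply unif_lim_ext with (fun h s => (phi1 (l + h) s - phi1 l s) / h * phi2 (l + h) s
                                     + phi1 l s * ((phi2 (l + h) s - phi2 l s) / h)); [intros; field; auto|].
  apply unif_lim_plus; apply unif_lim_mult; auto; apply unif_lim_const; auto.
Qed.

Lemma unif_derivable_plus phi1 psi1 phi2 psi2 l :
  unif_derivable phi1 l psi1 -> unif_derivable phi2 l psi2 ->
  unif_derivable (fun mu s => phi1 mu s + phi2 mu s) l (fun s => psi1 s + psi2 s).
Proof.
  intros [U1 B1] [U2 B2]; split; [|apply bounded_on_plus; auto].
  apply unif_lim_ext with (fun h s => (phi1 (l + h) s - phi1 l s) / h + (phi2 (l + h) s - phi2 l s) / h);
    [intros; field; auto | apply unif_lim_plus; auto].
Qed.

Lemma unif_derivable_rsum n phi psi l : (forall k, (k < n)%nat -> unif_derivable (phi k) l (psi k)) ->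
  unif_derivable (fun mu s => rsum n (fun k => phi k mu s)) l (fun s => rsum n (fun k => psi k s)).
Proof.
  induction n; intros Hf; simpl.
  - split; [|apply bounded_on_const].
    apply unif_lim_ext with (fun _ _ => 0); [intros; field; auto | apply unif_lim_const, bounded_on_const].
  - apply (unif_derivable_plus (fun mu s => rsum n (fun k => phi k mu s)) _ (phi n));
      [apply IHn; intros|]; apply Hf; lia.
Qed.

Lemma unif_derivable_ext phi phi' psi psi' l :
  (forall mu s, 0 <= s <= T -> phi mu s = phi' mu s) -> (forall s, 0 <= s <= T -> psi s = psi' s) ->
  unif_derivable phi l psi -> unif_derivable phi' l psi'.
Proof.
  intros E1 E2 [U B]; split; [|apply bounded_on_ext with (phi l); auto].
  apply unif_lim_ext_lim with psi; auto.
  apply unif_lim_ext with (fun h s => (phi (l + h) s - phi l s) / h); auto; intros; rewrite !E1; auto.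
Qed.

Lemma derivable_pt_lim_unif_derivable c l d :
  derivable_pt_lim c l d -> unif_derivable (fun mu _ => c mu) l (fun _ => d).
Proof.
  intros Hd; split; [|apply bounded_on_const]; split; [apply bounded_on_const|]; intros eps Heps.
  destruct (Hd eps Heps) as [del Hdel]; exists del; split; [apply cond_pos | intros; apply Hdel; auto].
Qed.

Lemma unif_lim_derivable_pt_lim c l d : 0 <= T ->
  unif_lim (fun h _ => (c (l + h) - c l) / h) (fun _ => d) -> derivable_pt_lim c l d.
Proof.
  intros HT [_ HU] eps Heps; destruct (HU eps Heps) as [del [Hdel Hh]].
  exists (mkposreal del Hdel); intros h Hh0 Hhd; apply (Hh h Hh0 Hhd 0); lra.
Qed.

Definition unif_lim_mx n (X : R -> R -> Mat) (X0 : R -> Mat) :=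
  forall a b, (a < n)%nat -> (b < n)%nat -> unif_lim (fun h s => X h s a b) (fun s => X0 s a b).

Lemma unif_lim_mmul n X X0 Y Y0 : unif_lim_mx n X X0 -> unif_lim_mx n Y Y0 ->
  unif_lim_mx n (fun h s => mmul n (X h s) (Y h s)) (fun s => mmul n (X0 s) (Y0 s)).
Proof.
  intros HX HY a b Ha Hb; unfold mmul.
  apply (unif_lim_rsum n (fun q h s => X h s a q * Y h s q b) (fun q s => X0 s a q * Y0 s q b)).
  intros; apply unif_lim_mult; [apply HX | apply HY]; auto.
Qed.

Definition unif_derivable_mx n (X : R -> R -> Mat) (l : R) (X' : R -> Mat) :=
  forall a b, (a < n)%nat -> (b < n)%nat -> unif_derivable (fun mu s => X mu s a b) l (fun s => X' s a b).

Lemma unif_derivable_mmul n X X' Y Y' l : unif_derivable_mx n X l X' -> unif_derivable_mx n Y l Y' ->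
  unif_derivable_mx n (fun mu s => mmul n (X mu s) (Y mu s)) l
    (fun s => madd (mmul n (X' s) (Y l s)) (mmul n (X l s) (Y' s))).
Proof.
  intros GX GY a b Ha Hb; unfold madd, mmul.
  apply unif_derivable_ext with (fun mu s => rsum n (fun k => X mu s a k * Y mu s k b))
    (fun s => rsum n (fun k => X' s a k * Y l s k b + X l s a k * Y' s k b));
    [reflexivity | intros; apply rsum_plus|].
  apply (unif_derivable_rsum n (fun k mu s => X mu s a k * Y mu s k b)); intros.
  apply unif_derivable_mult; [apply GX | apply GY]; auto.
Qed.

Lemma derivable_pt_lim_Rint_param phi psi l : 0 <= T -> unif_derivable phi l psi ->
  (forall mu s, 0 <= s <= T -> continuity_pt (phi mu) s) -> (forall s, 0 <= s <= T -> continuity_pt psi s) ->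
  derivable_pt_lim (fun mu => Rint (phi mu) 0 T) l (Rint psi 0 T).
Proof.
  intros HT [[_ HU] _] Hc Hpc eps Heps.
  destruct (HU (eps / (T + 1))) as [del [Hdel Hh]]; [apply Rdiv_lt_0_compat; lra|].
  exists (mkposreal del Hdel); simpl; intros h Hh0 Hhd.
  set (dphi := fun s => phi (l + h) s - phi l s).
  assert (Hd : forall s, 0 <= s <= T -> continuity_pt dphi s)
    by (intros; apply (continuity_pt_minus (phi (l + h)) (phi l)); auto).
  set (q := fun s => / h * dphi s - psi s).
  assert (E : (Rint (phi (l + h)) 0 T - Rint (phi l) 0 T) / h - Rint psi 0 T = Rint q 0 T).
  { unfold q; rewrite (Rint_minus 0 T HT), (Rint_scal 0 T HT); auto.
    - unfold dphi; rewrite (Rint_minus 0 T HT); auto; unfold Rdiv; ring.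
    - intros; apply continuity_pt_scal; auto. }
  rewrite E; eapply Rle_lt_trans; [apply (Rabs_Rint_le 0 T HT q (eps / (T + 1)))|].
  - intros s Hs; apply (continuity_pt_minus (fun s => / h * dphi s) psi); auto; apply continuity_pt_scal; auto.
  - intros s Hs; left; replace (q s) with ((phi (l + h) s - phi l s) / h - psi s)
      by (unfold q, dphi, Rdiv; ring); apply Hh; auto.
  - rewrite Rminus_0_r.
    assert (eps / (T + 1) * T = eps - eps / (T + 1)) by (field; lra).
    assert (0 < eps / (T + 1)) by (apply Rdiv_lt_0_compat; lra); lra.
Qed.

End UniformLimits.

(** * The blocks of the exponential *)

Lemma derivable_continuity_pt f x l : derivable_pt_lim f x l -> continuity_pt f x.
Proof. intros Hd; apply derivable_continuous_pt; exists l; auto. Qed.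

(* If X' = P X and Y' = -P^T Y + Q, then (X^T Y)' = X^T Q. *)
Lemma mtr_mmul_Rint n (X Y Q : R -> Mat) (P : Mat) H p q :
  (forall t a b, (a < n)%nat -> (b < n)%nat -> derivable_pt_lim (fun x => X x a b) t (mmul n P (X t) a b)) ->
  (forall t a b, (a < n)%nat -> (b < n)%nat ->
     derivable_pt_lim (fun x => Y x a b) t (mmul n (mopp (mtr P)) (Y t) a b + Q t a b)) ->
  mx_continuous n Q ->
  (forall a b, (a < n)%nat -> (b < n)%nat -> Y 0 a b = 0) ->
  0 <= H -> (p < n)%nat -> (q < n)%nat ->
  mmul n (mtr (X H)) (Y H) p q = Rint (fun s => mmul n (mtr (X s)) (Q s) p q) 0 H.
Proof.
  intros HX HY HQ HY0 HH Hp Hq.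
  rewrite (Rint_primitive (fun t => mmul n (mtr (X t)) (Y t) p q)); auto.
  - replace (mmul n (mtr (X 0)) (Y 0) p q) with 0; [ring|].
    symmetry; unfold mmul; apply rsum_eq0; intros; rewrite HY0; auto; ring.
  - intros t; apply derivable_pt_lim_eq_val with
      (mmul n (mtr (mmul n P (X t))) (Y t) p q
       + mmul n (mtr (X t)) (madd (mmul n (mopp (mtr P)) (Y t)) (Q t)) p q).
    + rewrite mmul_madd_r, mtr_mmul, mmul_mopp_l, mmul_mopp_r, mmul_assoc; unfold madd, mopp; ring.
    + apply (derivable_pt_lim_mmul n (fun t => mtr (X t)) Y); auto.
      intros a b Ha Hb; apply HX; auto.
  - intros t; apply continuity_pt_mmul; auto; intros a b Ha Hb.
    unfold mtr; eapply derivable_continuity_pt; apply HX; auto.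
Qed.

Lemma mmul_eq0_l n A B i j : (forall l, (l < n)%nat -> A i l = 0) -> mmul n A B i j = 0.
Proof. intros HA; unfold mmul; apply rsum_eq0; intros; rewrite HA; auto; ring. Qed.

Lemma rsum_split3 m f : rsum (6 * m) f =
  rsum (2 * m) (fun l => f (0 * (2 * m) + l)%nat) + rsum (2 * m) (fun l => f (1 * (2 * m) + l)%nat)
  + rsum (2 * m) (fun l => f (2 * (2 * m) + l)%nat).
Proof.
  replace (6 * m)%nat with (2 * m + (2 * m + 2 * m))%nat by lia; rewrite !rsum_add, Rplus_assoc.
  f_equal; f_equal; apply rsum_ext; intros; f_equal; lia.
Qed.

Lemma blk_mmul m X Y a b i j :
  blk m (mmul (6 * m) X Y) a b i j =
  mmul (2 * m) (blk m X a 0) (blk m Y 0 b) i j + mmul (2 * m) (blk m X a 1) (blk m Y 1 b) i j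
  + mmul (2 * m) (blk m X a 2) (blk m Y 2 b) i j.
Proof. unfold blk, mmul at 1; rewrite rsum_split3; reflexivity. Qed.

Ltac bigA_cases := unfold blk, bigA; cbv zeta;
  repeat match goal with |- context [Nat.ltb ?a ?b] => destruct (Nat.ltb_spec a b); try lia end.

Section Blocks.
Variables (m : nat) (N M : Mat).
Let k := (2 * m)%nat.
Let A := bigA m N M.

Lemma bigA_blk00 i l : (i < k)%nat -> (l < k)%nat -> blk m A 0 0 i l = - N l i.
Proof. unfold A, k; intros; bigA_cases; do 2 f_equal; lia. Qed.
Lemma bigA_blk01 i l : (i < k)%nat -> (l < k)%nat -> blk m A 0 1 i l = mmul k M (Jm m) i l.
Proof. unfold A, k; intros; bigA_cases; f_equal; lia. Qed.
Lemma bigA_blk02 i l : (i < k)%nat -> (l < k)%nat -> blk m A 0 2 i l = 0.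
Proof. unfold A, k; intros; bigA_cases; auto. Qed.
Lemma bigA_blk10 i l : (i < k)%nat -> (l < k)%nat -> blk m A 1 0 i l = 0.
Proof. unfold A, k; intros; bigA_cases; auto. Qed.
Lemma bigA_blk11 i l : (i < k)%nat -> (l < k)%nat -> blk m A 1 1 i l = - N l i.
Proof. unfold A, k; intros; bigA_cases; do 2 f_equal; lia. Qed.
Lemma bigA_blk12 i l : (i < k)%nat -> (l < k)%nat -> blk m A 1 2 i l = M i l.
Proof. unfold A, k; intros; bigA_cases; f_equal; lia. Qed.
Lemma bigA_blk22 i l : (i < k)%nat -> (l < k)%nat -> blk m A 2 2 i l = N i l.
Proof. unfold A, k; intros; bigA_cases; f_equal; lia. Qed.
Lemma bigA_lower_left0 i l : (2 * k <= i)%nat -> (l < 2 * k)%nat -> A i l = 0.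
Proof. unfold A, k; intros; bigA_cases; auto. Qed.

Lemma bigA_blk20 i l : (i < k)%nat -> (l < k)%nat -> blk m A 2 0 i l = 0.
Proof. unfold A, k; intros; bigA_cases; auto. Qed.
Lemma bigA_blk21 i l : (i < k)%nat -> (l < k)%nat -> blk m A 2 1 i l = 0.
Proof. unfold A, k; intros; bigA_cases; auto. Qed.

Lemma Ephi_blk_lower0 t c i l : (c < 2)%nat -> (i < k)%nat -> (l < k)%nat -> blk m (Ephi m N M t) 2 c i l = 0.
Proof.
  intros; apply (mexpt_lower_left0 (6 * m) (2 * k) A); unfold k in *; try nia.
  intros; apply bigA_lower_left0; auto.
Qed.

Lemma Ephi_blk_derivable_pt_lim a b t i j : (a < 3)%nat -> (b < 3)%nat -> (i < k)%nat -> (j < k)%nat ->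
  derivable_pt_lim (fun x => blk m (Ephi m N M x) a b i j) t (blk m (mmul (6 * m) A (Ephi m N M t)) a b i j).
Proof. intros; apply (mexpt_derivable_pt_lim_l (6 * m) A); unfold k in *; nia. Qed.

Lemma Ephi_blk_mx_continuous a b : (a < 3)%nat -> (b < 3)%nat ->
  mx_continuous k (fun s => blk m (Ephi m N M s) a b).
Proof. intros; intros t i j Hi Hj; eapply derivable_continuity_pt, Ephi_blk_derivable_pt_lim; auto. Qed.

Lemma F3B_derivable_pt_lim t i j : (i < k)%nat -> (j < k)%nat ->
  derivable_pt_lim (fun x => F3B m N M x i j) t (mmul k N (F3B m N M t) i j).
Proof.
  intros; eapply derivable_pt_lim_eq_val; [|apply (Ephi_blk_derivable_pt_lim 2 2); auto].
  rewrite blk_mmul; fold k.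
  rewrite (mmul_eq0_l k (blk m A 2 0)) by (intros; apply bigA_blk20; auto).
  rewrite (mmul_eq0_l k (blk m A 2 1)), !Rplus_0_l by (intros; apply bigA_blk21; auto).
  apply mmul_ext_l; auto; intros; apply bigA_blk22; auto.
Qed.

Lemma G2B_derivable_pt_lim t i j : (i < k)%nat -> (j < k)%nat ->
  derivable_pt_lim (fun x => G2B m N M x i j) t
    (mmul k (mopp (mtr N)) (G2B m N M t) i j + mmul k M (F3B m N M t) i j).
Proof.
  intros; eapply derivable_pt_lim_eq_val; [|apply (Ephi_blk_derivable_pt_lim 1 2); auto].
  rewrite blk_mmul; fold k; rewrite (mmul_eq0_l k (blk m A 1 0)), Rplus_0_l by (intros; apply bigA_blk10; auto).
  f_equal; apply mmul_ext_l; auto; intros; [apply bigA_blk11 | apply bigA_blk12]; auto.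
Qed.

Lemma gammaB_derivable_pt_lim t i j : (i < k)%nat -> (j < k)%nat ->
  derivable_pt_lim (fun x => gammaB m N M x i j) t
    (mmul k (mopp (mtr N)) (gammaB m N M t) i j + mmul k (mmul k M (Jm m)) (G2B m N M t) i j).
Proof.
  intros; eapply derivable_pt_lim_eq_val; [|apply (Ephi_blk_derivable_pt_lim 0 2); auto].
  rewrite blk_mmul; fold k; rewrite (mmul_eq0_l k (blk m A 0 2)), Rplus_0_r by (intros; apply bigA_blk02; auto).
  f_equal; apply mmul_ext_l; auto; intros; [apply bigA_blk00 | apply bigA_blk01]; auto.
Qed.

Lemma F3B_inverse t : is_inverse k (F3B m N M t) (F3B m N M (- t)).
Proof.
  intros i j Hi Hj.
  rewrite <- (mid_shift (2 * k)), <- (mexpt_inverse (6 * m) A t) by (unfold k in *; lia).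
  change (mmul (6 * m) (mexpt (6 * m) A t) (mexpt (6 * m) A (- t)) (2 * k + i)%nat (2 * k + j)%nat)
    with (blk m (mmul (6 * m) (Ephi m N M t) (Ephi m N M (- t))) 2 2 i j).
  rewrite blk_mmul; fold k.
  rewrite (mmul_eq0_l k (blk m (Ephi m N M t) 2 0)) by (intros; apply Ephi_blk_lower0; auto).
  rewrite (mmul_eq0_l k (blk m (Ephi m N M t) 2 1)), !Rplus_0_l by (intros; apply Ephi_blk_lower0; auto).
  reflexivity.
Qed.

Lemma Ephi_blk0 a b i j : (a < b)%nat -> (b < 3)%nat -> (i < k)%nat -> (j < k)%nat -> blk m (Ephi m N M 0) a b i j = 0.
Proof.
  intros Hab Hb Hi Hj; assert (a * k + k <= b * k)%nat by (replace (a * k + k)%nat with (S a * k)%nat by lia;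
    apply Nat.mul_le_mono_r; lia); unfold blk; change (Ephi m N M 0) with (mexpt (6 * m) A 0).
  rewrite mexpt0 by (unfold k in *; nia); unfold mid.
  destruct (Nat.eqb_spec (a * (2 * m) + i) (b * (2 * m) + j)); [|reflexivity].
  exfalso; unfold k in *; nia.
Qed.

Lemma mtr_F3B_G2B_Rint H p q : 0 <= H -> (p < k)%nat -> (q < k)%nat ->
  mmul k (mtr (F3B m N M H)) (G2B m N M H) p q
  = Rint (fun s => mmul k (mtr (F3B m N M s)) (mmul k M (F3B m N M s)) p q) 0 H.
Proof.
  intros; apply (mtr_mmul_Rint k (F3B m N M) (G2B m N M) (fun s => mmul k M (F3B m N M s)) N); auto.
  - intros; apply F3B_derivable_pt_lim; auto.
  - intros; apply G2B_derivable_pt_lim; auto.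
  - apply mx_continuous_mmul; [apply mx_continuous_const | apply Ephi_blk_mx_continuous; auto].
  - intros; apply Ephi_blk0; auto; lia.
Qed.

Lemma mtr_F3B_gammaB_Rint H p q : 0 <= H -> (p < k)%nat -> (q < k)%nat ->
  mmul k (mtr (F3B m N M H)) (gammaB m N M H) p q
  = Rint (fun s => mmul k (mtr (F3B m N M s)) (mmul k (mmul k M (Jm m)) (G2B m N M s)) p q) 0 H.
Proof.
  intros; apply (mtr_mmul_Rint k (F3B m N M) (gammaB m N M) (fun s => mmul k (mmul k M (Jm m)) (G2B m N M s)) N); auto.
  - intros; apply F3B_derivable_pt_lim; auto.
  - intros; apply gammaB_derivable_pt_lim; auto.
  - apply mx_continuous_mmul; [apply mx_continuous_const | apply Ephi_blk_mx_continuous; auto].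
  - intros; apply Ephi_blk0; auto; lia.
Qed.

End Blocks.

Ltac mx_continuous_tac :=
  cbv beta;
  lazymatch goal with
  | |- mx_continuous _ (fun s => madd _ _) => apply mx_continuous_madd; mx_continuous_tac
  | |- mx_continuous _ (fun s => mmul _ _ _) => apply mx_continuous_mmul; mx_continuous_tac
  | |- mx_continuous _ (fun s => mtr _) => apply mx_continuous_mtr; mx_continuous_tac
  | |- mx_continuous _ (fun s => mopp _) => apply mx_continuous_mopp; mx_continuous_tac
  | |- mx_continuous _ (fun _ => ?C) => apply mx_continuous_const
  | |- mx_continuous _ (F3B _ _ _) => apply Ephi_blk_mx_continuous; lia
  | |- mx_continuous _ (G2B _ _ _) => apply Ephi_blk_mx_continuous; lia
  end.

Ltac solve_mx_continuous :=
  cbv beta;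
  lazymatch goal with
  | |- continuity_pt (fun s => mmul ?n (@?X s) (@?Y s) ?a ?b) ?t =>
      apply (mx_continuous_entry n (fun s => mmul n (X s) (Y s)) t a b)
  | |- continuity_pt (fun s => madd (@?X s) (@?Y s) ?a ?b) ?t =>
      eapply (mx_continuous_entry _ (fun s => madd (X s) (Y s)) t a b)
  end; [mx_continuous_tac | auto | auto].

(** * Dependence on a parameter *)

Lemma continuity_pt_eps f l : continuity_pt f l ->
  forall eps, 0 < eps -> exists del, 0 < del /\ forall x, Rabs (x - l) < del -> Rabs (f x - f l) < eps.
Proof.
  intros Hc eps Heps; destruct (Hc eps Heps) as [del [Hdel Hx]]; exists del; split; auto; intros x Hxl.
  destruct (Req_dec x l) as [->|Hne]; [rewrite Rminus_diag, Rabs_R0; auto|].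
  apply (Hx x); repeat split; auto.
Qed.

Lemma continuity_pt_unif_lim T f l : continuity_pt f l -> unif_lim T (fun h _ => f (l + h)) (fun _ => f l).
Proof.
  intros Hc; split; [apply bounded_on_const|]; intros eps Heps.
  destruct (continuity_pt_eps f l Hc eps Heps) as [del [Hdel Hx]]; exists del; split; auto.
  intros h _ Hh s _; apply Hx; replace (l + h - l) with h by ring; auto.
Qed.

Lemma unif_lim_continuity_pt T f l s : unif_lim T (fun h s => f (l + h) s) (f l) -> 0 <= s <= T ->
  continuity_pt (fun mu => f mu s) l.
Proof.
  intros [_ HU] Hs eps Heps; destruct (HU eps Heps) as [del [Hdel Hh]]; exists del; split; auto.
  intros x [[_ Hx] Hxl]; simpl in *; unfold Rdist in *.
  replace x with (l + (x - l)) by ring; apply Hh; auto; lra.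
Qed.

Section ParametricExponential.
Variables (n : nat) (A : R -> Mat) (l T : R).
Hypothesis HT : 0 <= T.
Hypothesis HA : forall i j, (i < n)%nat -> (j < n)%nat -> continuity_pt (fun mu => A mu i j) l.

Lemma mnorm_msub_small eps : 0 < eps ->
  exists del, 0 < del /\ forall mu, Rabs (mu - l) < del -> mnorm n (msub (A mu) (A l)) < eps.
Proof.
  intros Heps.
  assert (Hc : continuity_pt (fun mu => mnorm n (msub (A mu) (A l))) l).
  { apply (continuity_pt_rsum n (fun a mu => rsum n (fun b => Rabs (msub (A mu) (A l) a b)))); intros a Ha.
    apply (continuity_pt_rsum n (fun b mu => Rabs (msub (A mu) (A l) a b))); intros b Hb.
    apply (continuity_pt_comp (fun mu => msub (A mu) (A l) a b) Rabs); [|apply Rcontinuity_abs].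
    apply (continuity_pt_minus (fun mu => A mu a b) (fun _ => A l a b)); [auto | apply continuity_pt_cst]. }
  destruct (continuity_pt_eps _ _ Hc eps Heps) as [del [Hdel Hx]]; exists del; split; auto.
  intros mu Hmu; specialize (Hx mu Hmu).
  replace (mnorm n (msub (A l) (A l))) with 0 in Hx
    by (symmetry; apply rsum_eq0; intros; apply rsum_eq0; intros; unfold msub; rewrite Rminus_diag, Rabs_R0; auto).
  rewrite Rminus_0_r in Hx; eapply Rle_lt_trans; [apply RRle_abs | auto].
Qed.

Lemma mexpt_param_unif_lim i j : (i < n)%nat -> (j < n)%nat ->
  unif_lim T (fun h s => mexpt n (A (l + h)) s i j) (fun s => mexpt n (A l) s i j).
Proof.
  intros Hi Hj; set (R := mnorm n (A l)); assert (HR : 0 <= R) by apply mnorm_ge0.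
  assert (Hs : forall s B, 0 <= s <= T -> mnorm n B <= R + 1 -> mnorm n (mscal s B) <= T * (R + 1)).
  { intros s B Hs HB; rewrite mnorm_mscal, Rabs_right by lra.
    apply Rmult_le_compat; try lra; apply mnorm_ge0. }
  assert (He : 0 < exp (T * (R + 1))) by apply exp_pos.
  split.
  - exists (exp (T * (R + 1))); intros s Hs0.
    eapply Rle_trans; [apply Rabs_mexp_le; auto|].
    apply exp_le_compat, Hs; auto; fold R; lra.
  - intros eps Heps.
    set (e := exp (T * (R + 1))) in *; set (eps' := Rmin 1 (eps / ((T + 1) * e))).
    assert (He' : 0 < eps') by (apply Rmin_pos; [lra | apply Rdiv_lt_0_compat; [lra | apply Rmult_lt_0_compat; lra]]).
    assert (He'' : (T + 1) * e * eps' <= eps).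
    { assert (Hm : eps' <= eps / ((T + 1) * e)) by apply Rmin_r.
      assert (0 < (T + 1) * e) by (apply Rmult_lt_0_compat; lra).
      apply Rmult_le_compat_l with (r := (T + 1) * e) in Hm; [|lra].
      replace ((T + 1) * e * (eps / ((T + 1) * e))) with eps in Hm by (field; lra); exact Hm. }
    destruct (mnorm_msub_small eps' He') as [del [Hdel Hd]]; exists del; split; auto.
    intros h _ Hh s Hs0; specialize (Hd (l + h)); replace (l + h - l) with h in Hd by ring; specialize (Hd Hh).
    set (d := mnorm n (msub (A (l + h)) (A l))) in *; assert (0 <= d) by apply mnorm_ge0.
    assert (HAh : mnorm n (A (l + h)) <= R + 1).
    { pose proof (mnorm_le_sub n (A (l + h)) (A l)) as Ht; assert (eps' <= 1) by apply Rmin_l.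
      fold R d in Ht; lra. }
    eapply Rle_lt_trans; [apply (Rabs_mexp_sub_le n _ _ (T * (R + 1))); auto; apply Hs; auto; fold R; lra|].
    rewrite msub_mscal, mnorm_mscal, Rabs_right by lra; fold d e.
    apply Rle_lt_trans with ((T + 1) * e * d); [|nra].
    replace (s * d * e) with (s * (e * d)) by ring; replace ((T + 1) * e * d) with ((T + 1) * (e * d)) by ring.
    apply Rmult_le_compat_r; [apply Rmult_le_pos|]; lra.
Qed.

Lemma mexpt_param_continuity_pt s i j : 0 <= s <= T -> (i < n)%nat -> (j < n)%nat ->
  continuity_pt (fun mu => mexpt n (A mu) s i j) l.
Proof.
  intros; apply (unif_lim_continuity_pt T (fun mu s => mexpt n (A mu) s i j)); auto.
  apply mexpt_param_unif_lim; auto.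
Qed.

End ParametricExponential.

Lemma MVT_quotient f f' l h : h <> 0 -> (forall x, derivable_pt_lim f x (f' x)) ->
  exists c, Rabs (c - l) < Rabs h /\ (f (l + h) - f l) / h = f' c.
Proof.
  intros Hh Hd; destruct (Rlt_dec 0 h) as [Hp|Hn].
  - destruct (MVT_cor2 f f' l (l + h)) as [c [Hc1 Hc2]]; [lra | intros; auto|].
    exists c; split; [rewrite !Rabs_right; lra|]; rewrite Hc1; field; lra.
  - destruct (MVT_cor2 f f' (l + h) l) as [c [Hc1 Hc2]]; [lra | intros; auto|].
    exists c; split; [rewrite Rabs_left, Rabs_left1; lra|].
    replace (f (l + h) - f l) with (- (f l - f (l + h))) by ring; rewrite Hc1; field; lra.
Qed.

(* By the mean value theorem, difference quotients are values of the derivative at nearby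
   parameters, so a derivative that is continuous in the parameter uniformly in [s] gives
   uniform differentiability. *)
Lemma unif_derivable_of_derivative T phi D l :
  (forall mu s, 0 <= s <= T -> derivable_pt_lim (fun x => phi x s) mu (D mu s)) ->
  unif_lim T (fun h s => D (l + h) s) (D l) -> bounded_on T (phi l) -> unif_derivable T phi l (D l).
Proof.
  intros Hd [HB HU] Hphi; split; auto; split; auto; intros eps Heps.
  destruct (HU eps Heps) as [del [Hdel Hh]]; exists del; split; auto; intros h Hh0 Hhd s Hs.
  destruct (MVT_quotient (fun x => phi x s) (fun x => D x s) l h Hh0 (fun x => Hd x s Hs)) as [c [Hc ->]].
  destruct (Req_dec c l) as [->|Hcl]; [rewrite Rminus_diag, Rabs_R0; auto|].
  replace c with (l + (c - l)) by ring; apply Hh; auto; lra.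
Qed.

Lemma inverse_derivable_pt_lim n (X Y : R -> Mat) Y' l a b :
  (forall mu, is_inverse n (X mu) (Y mu)) -> is_inverse n (Y l) (X l) ->
  (forall i j, (i < n)%nat -> (j < n)%nat -> continuity_pt (fun mu => X mu i j) l) ->
  (forall i j, (i < n)%nat -> (j < n)%nat -> derivable_pt_lim (fun mu => Y mu i j) l (Y' i j)) ->
  (a < n)%nat -> (b < n)%nat ->
  derivable_pt_lim (fun mu => X mu a b) l (mopp (mmul n (mmul n (X l) Y') (X l)) a b).
Proof.
  intros HXY HYX HX HY Ha Hb; apply (unif_lim_derivable_pt_lim 0); [lra|].
  set (Q := fun h i j => (Y (l + h) i j - Y l i j) / h).
  apply unif_lim_ext with (fun h _ => mopp (mmul n (mmul n (X (l + h)) (Q h)) (X l)) a b).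
  - intros h _ Hh _.
    replace (Q h) with (mscal (/ h) (msub (Y (l + h)) (Y l)))
      by (unfold Q, mscal, msub; do 2 (apply functional_extensionality; intro); unfold Rdiv; ring).
    rewrite mmul_mscal_r, mmul_msub_r, mmul_mscal_l, mmul_msub_l; unfold mopp, mscal, msub.
    rewrite (mmul_ext_l n (mmul n (X (l + h)) (Y (l + h))) mid), mmul_assoc, (mmul_ext_r n (X (l + h)) _ mid),
      mmul_mid_l, mmul_mid_r by (auto; intros; first [apply HXY | apply HYX]; auto).
    field; auto.
  - apply (unif_lim_opp 0 (fun h _ => mmul n (mmul n (X (l + h)) (Q h)) (X l) a b)).
    apply (unif_lim_mmul 0 n (fun h _ => mmul n (X (l + h)) (Q h)) (fun _ => mmul n (X l) Y')
             (fun _ _ => X l) (fun _ => X l)); auto.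
    + apply unif_lim_mmul; intros i j Hi Hj; [apply (continuity_pt_unif_lim 0 (fun mu => X mu i j)); auto|].
      apply (proj1 (derivable_pt_lim_unif_derivable 0 (fun mu => Y mu i j) l (Y' i j) (HY i j Hi Hj))).
    + intros i j _ _; apply unif_lim_const, bounded_on_const.
Qed.

(** * The derivative of G2 *)

Section Derivative.
Variables (m : nat) (N M dM : R -> Mat) (H : R).
Local Notation k := (2 * m)%nat.
Hypothesis hH : 0 <= H.
Hypothesis hN : forall l i j, (i < k)%nat -> (j < k)%nat -> continuity_pt (fun x => N x i j) l.
Hypothesis hM : forall l i j, (i < k)%nat -> (j < k)%nat -> derivable_pt_lim (fun x => M x i j) l (dM l i j).
Hypothesis hsym : forall l i j, (i < k)%nat -> (j < k)%nat -> M l i j = M l j i.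
Hypothesis hF : forall l s, 0 <= s <= H -> is_inverse k (mtr (F2B m (N l) (M l) s)) (F3B m (N l) (M l) s).
Hypothesis hdF3 : forall l s, 0 <= s <= H -> forall i j, (i < k)%nat -> (j < k)%nat ->
  derivable_pt_lim (fun x => F3B m (N x) (M x) s i j) l (- mmul k (Jm m) (G2B m (N l) (M l) s) i j).

Local Notation A mu := (bigA m (N mu) (M mu)).
Local Notation F2 mu := (F2B m (N mu) (M mu) H).
Local Notation F3 mu s := (F3B m (N mu) (M mu) s).
Local Notation G2 mu s := (G2B m (N mu) (M mu) s).
Local Notation dF3 l s := (mopp (mmul k (Jm m) (G2 l s))).
Let K mu : Mat := fun p q => Rint (fun s => mmul k (mtr (F3 mu s)) (mmul k (M mu) (F3 mu s)) p q) 0 H.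

Lemma bigA_continuity_pt l i j : (i < 6 * m)%nat -> (j < 6 * m)%nat -> continuity_pt (fun mu => A mu i j) l.
Proof.
  intros Hi Hj; unfold bigA; cbv zeta;
    repeat match goal with |- context [Nat.ltb ?a ?b] => destruct (Nat.ltb_spec a b) end;
    try apply continuity_pt_cst.
  - apply (continuity_pt_opp (fun mu => N mu j i)); apply hN; lia.
  - apply (continuity_pt_rsum (2 * m) (fun q mu => M mu i q * Jm m q (j - 2 * m)%nat)); intros q Hq.
    apply (continuity_pt_mult (fun mu => M mu i q) (fun _ => _)); [|apply continuity_pt_cst].
    eapply derivable_continuity_pt, hM; lia.
  - apply (continuity_pt_opp (fun mu => N mu (j - 2 * m)%nat (i - 2 * m)%nat)); apply hN; lia.
  - eapply derivable_continuity_pt, hM; lia.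
  - apply hN; lia.
Qed.

Lemma Ephi_blk_unif_lim l a b i j : (a < 3)%nat -> (b < 3)%nat -> (i < k)%nat -> (j < k)%nat ->
  unif_lim H (fun h s => blk m (Ephi m (N (l + h)) (M (l + h)) s) a b i j)
             (fun s => blk m (Ephi m (N l) (M l) s) a b i j).
Proof.
  intros; apply (mexpt_param_unif_lim (6 * m) (fun mu => A mu)); auto; try nia.
  intros; apply bigA_continuity_pt; auto.
Qed.

Lemma F3_unif_derivable l : unif_derivable_mx H k (fun mu s => F3 mu s) l (fun s => dF3 l s).
Proof.
  intros a b Ha Hb; apply (unif_derivable_of_derivative H (fun mu s => F3 mu s a b) (fun mu s => dF3 mu s a b)).
  - intros mu s Hs; apply hdF3; auto.
  - apply (unif_lim_opp H (fun h s => mmul k (Jm m) (G2 (l + h) s) a b)).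
    apply (unif_lim_rsum H k (fun q h s => Jm m a q * G2 (l + h) s q b)); intros q Hq.
    apply (unif_lim_mult H (fun _ _ => Jm m a q)); [apply unif_lim_const, bounded_on_const|].
    apply (Ephi_blk_unif_lim l 1 2); auto.
  - apply (proj1 (Ephi_blk_unif_lim l 2 2 a b ltac:(lia) ltac:(lia) Ha Hb)).
Qed.

Lemma F2_F3tr_inverse mu : is_inverse k (F2 mu) (mtr (F3 mu H)).
Proof.
  apply (is_inverse_mtr k (F3 mu H) (mtr (F2 mu))).
  apply (is_inverse_swap k _ _ (F3 mu (- H))); [apply hF; lra | apply F3B_inverse].
Qed.

Lemma F3tr_F2_inverse mu : is_inverse k (mtr (F3 mu H)) (F2 mu).
Proof. apply (is_inverse_mtr k (mtr (F2 mu)) (F3 mu H)), hF; lra. Qed.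

Lemma F2_derivable_pt_lim l a b : (a < k)%nat -> (b < k)%nat ->
  derivable_pt_lim (fun mu => F2 mu a b) l (mopp (mmul k (mmul k (F2 l) (mtr (dF3 l H))) (F2 l)) a b).
Proof.
  intros; apply (inverse_derivable_pt_lim k (fun mu => F2 mu) (fun mu => mtr (F3 mu H))); auto.
  - apply F2_F3tr_inverse.
  - apply F3tr_F2_inverse.
  - intros i j Hi Hj; apply (mexpt_param_continuity_pt (6 * m) (fun mu => A mu) l H hH); try nia.
    + intros; apply bigA_continuity_pt; auto.
    + lra.
  - intros i j Hi Hj; apply hdF3; auto; lra.
Qed.

Lemma G2_F2_K mu i j : (i < k)%nat -> (j < k)%nat -> G2 mu H i j = mmul k (F2 mu) (K mu) i j.
Proof.
  intros Hi Hj; rewrite <- (mmul_mid_l k (G2 mu H) i j Hi).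
  rewrite (mmul_ext_l k mid (mmul k (F2 mu) (mtr (F3 mu H)))), mmul_assoc
    by (auto; intros; symmetry; apply F2_F3tr_inverse; auto).
  apply mmul_ext_r; auto; intros; apply mtr_F3B_G2B_Rint; auto.
Qed.

Let dK_integrand l s :=
  madd (mmul k (mtr (dF3 l s)) (mmul k (M l) (F3 l s)))
       (mmul k (mtr (F3 l s)) (madd (mmul k (dM l) (F3 l s)) (mmul k (M l) (dF3 l s)))).

Lemma K_derivable_pt_lim l p q : (p < k)%nat -> (q < k)%nat ->
  derivable_pt_lim (fun mu => K mu p q) l (Rint (fun s => dK_integrand l s p q) 0 H).
Proof.
  intros Hp Hq.
  apply (derivable_pt_lim_Rint_param H (fun mu s => mmul k (mtr (F3 mu s)) (mmul k (M mu) (F3 mu s)) p q)); auto.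
  - assert (HM : unif_derivable_mx H k (fun mu _ => M mu) l (fun _ => dM l))
      by (intros a b Ha Hb; apply (derivable_pt_lim_unif_derivable H (fun mu => M mu a b)), hM; auto).
    apply (unif_derivable_mmul H k (fun mu s => mtr (F3 mu s))); auto.
    + intros a b Ha Hb; apply F3_unif_derivable; auto.
    + apply (unif_derivable_mmul H k (fun mu _ => M mu)); auto; apply F3_unif_derivable.
  - intros mu s _; solve_mx_continuous.
  - intros s _; unfold dK_integrand; solve_mx_continuous.
Qed.

Lemma Rint_F3tr_M_dF3 l a b : (a < k)%nat -> (b < k)%nat ->
  Rint (fun s => mmul k (mtr (F3 l s)) (mmul k (M l) (dF3 l s)) a b) 0 H
  = - mmul k (mtr (F3 l H)) (gammaB m (N l) (M l) H) a b.
Proof.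
  intros Ha Hb; rewrite mtr_F3B_gammaB_Rint, <- Rint_opp; auto.
  - apply Rint_ext; auto.
    + intros x _; cbv beta; rewrite mmul_mopp_r, mmul_mopp_r, mmul_assoc; reflexivity.
    + intros x _; solve_mx_continuous.
    + intros x _; apply (continuity_pt_opp (fun s => mmul k _ _ a b)); solve_mx_continuous.
  - intros x _; solve_mx_continuous.
Qed.

Lemma Rint_dK_integrand l p q : (p < k)%nat -> (q < k)%nat ->
  Rint (fun s => dK_integrand l s p q) 0 H
  = - mmul k (mtr (F3 l H)) (gammaB m (N l) (M l) H) q p
    - mmul k (mtr (F3 l H)) (gammaB m (N l) (M l) H) p q
    + Rint (fun s => mmul k (mmul k (mtr (F3 l s)) (dM l)) (F3 l s) p q) 0 H.
Proof.
  intros Hp Hq; unfold Rminus; rewrite <- (Rint_F3tr_M_dF3 l q p), <- (Rint_F3tr_M_dF3 l p q) by auto.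
  set (T1 s := mmul k (mtr (F3 l s)) (mmul k (M l) (dF3 l s)) q p).
  set (T2 s := mmul k (mmul k (mtr (F3 l s)) (dM l)) (F3 l s) p q).
  set (T3 s := mmul k (mtr (F3 l s)) (mmul k (M l) (dF3 l s)) p q).
  assert (C1 : forall s, 0 <= s <= H -> continuity_pt T1 s) by (intros; unfold T1; solve_mx_continuous).
  assert (C2 : forall s, 0 <= s <= H -> continuity_pt T2 s) by (intros; unfold T2; solve_mx_continuous).
  assert (C3 : forall s, 0 <= s <= H -> continuity_pt T3 s) by (intros; unfold T3; solve_mx_continuous).
  rewrite (Rint_ext 0 H hH _ (fun s => T1 s + (T2 s + T3 s))), Rint_plus, Rint_plus; auto.
  - ring.
  - intros; apply (continuity_pt_plus T2 T3); auto.
  - intros s _; unfold dK_integrand, madd at 1; rewrite mmul_madd_r; unfold madd, T1, T2, T3.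
    rewrite <- (mmul_assoc k (mtr (F3 l s)) (dM l)), <- !(mmul_assoc k _ (M l)).
    rewrite (mmul_mtr_sym k (dF3 l s) (F3 l s) (M l)); auto.
  - intros s _; unfold dK_integrand; solve_mx_continuous.
  - intros; apply (continuity_pt_plus T1 (fun s => T2 s + T3 s)); auto.
    intros; apply (continuity_pt_plus T2 T3); auto.
Qed.

Lemma G2_derivable_pt_lim l i j : (i < k)%nat -> (j < k)%nat ->
  let P := mmul k (mtr (F3 l H)) (gammaB m (N l) (M l) H) in
  let Int : Mat := fun p q => Rint (fun s => mmul k (mmul k (mtr (F3 l s)) (dM l)) (F3 l s) p q) 0 H in
  derivable_pt_lim (fun mu => G2 mu H i j) l
    (mmul k (F2 l) (msub (madd (msub (mopp (mtr P)) P) Int) (mmul k (mtr (dF3 l H)) (G2 l H))) i j).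
Proof.
  intros Hi Hj P Int.
  set (dF2 := mopp (mmul k (mmul k (F2 l) (mtr (dF3 l H))) (F2 l))).
  set (dK := (fun p q => Rint (fun s => dK_integrand l s p q) 0 H) : Mat).
  apply derivable_pt_lim_eq_val with (mmul k dF2 (K l) i j + mmul k (F2 l) dK i j).
  - rewrite mmul_msub_r; unfold msub at 1.
    rewrite (mmul_ext_r k (F2 l) dK (madd (msub (mopp (mtr P)) P) Int))
      by (auto; intros; unfold dK; rewrite Rint_dK_integrand; auto).
    unfold dF2; rewrite mmul_mopp_l, mmul_assoc; unfold mopp at 1.
    rewrite (mmul_ext_r k _ (mmul k (F2 l) (K l)) (G2 l H)) by (auto; intros; symmetry; apply G2_F2_K; auto).
    rewrite mmul_assoc; ring.
  - apply derivable_pt_lim_ext with (fun mu => mmul k (F2 mu) (K mu) i j); [intros; symmetry; apply G2_F2_K; auto|].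
    apply (derivable_pt_lim_mmul k (fun mu => F2 mu) K); auto.
    + intros; apply F2_derivable_pt_lim; auto.
    + intros; apply K_derivable_pt_lim; auto.
Qed.
End Derivative.

Theorem lemmaA2 (m : nat) (N M dN dM : R -> Mat) (H : R)
  (hH : 0 <= H)
  (hN : forall l i j, (i < 2 * m)%nat -> (j < 2 * m)%nat ->
        derivable_pt_lim (fun x => N x i j) l (dN l i j))
  (hdN : forall i j, (i < 2 * m)%nat -> (j < 2 * m)%nat ->
        continuity (fun x => dN x i j))
  (hM : forall l i j, (i < 2 * m)%nat -> (j < 2 * m)%nat ->
        derivable_pt_lim (fun x => M x i j) l (dM l i j))
  (hdM : forall i j, (i < 2 * m)%nat -> (j < 2 * m)%nat ->
        continuity (fun x => dM x i j))
  (hsym : forall l i j, (i < 2 * m)%nat -> (j < 2 * m)%nat ->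
        M l i j = M l j i)
  (hF : forall l s, 0 <= s <= H -> forall i j, (i < 2 * m)%nat -> (j < 2 * m)%nat ->
        mmul (2 * m) (mtr (F2B m (N l) (M l) s)) (F3B m (N l) (M l) s) i j = mid i j)
  (hdF3 : forall l s, 0 <= s <= H -> forall i j, (i < 2 * m)%nat -> (j < 2 * m)%nat ->
        derivable_pt_lim (fun x => F3B m (N x) (M x) s i j) l
          (- mmul (2 * m) (Jm m) (G2B m (N l) (M l) s) i j)) :
  forall l i j, (i < 2 * m)%nat -> (j < 2 * m)%nat ->
    derivable_pt_lim (fun x => G2B m (N x) (M x) H i j) l
      (let n := (2 * m)%nat in
       let F2H := F2B m (N l) (M l) H in
       let G2H := G2B m (N l) (M l) H in
       let F3H := F3B m (N l) (M l) H in
       let P := mmul n (mtr F3H) (gammaB m (N l) (M l) H) in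
       let Int : Mat := fun p q =>
         Rint (fun s => mmul n (mmul n (mtr (F3B m (N l) (M l) s)) (dM l))
                              (F3B m (N l) (M l) s) p q) 0 H in
       let W := msub (madd (msub (mopp (mtr P)) P) Int)
                     (mmul n (mtr (mopp (mmul n (Jm m) G2H))) G2H) in
       mmul n F2H W i j).
Proof.
  intros l i j Hi Hj.
  apply (G2_derivable_pt_lim m N M dM H hH); auto.
  intros x a b Ha Hb; eapply derivable_continuity_pt, hN; auto.
Qed.
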